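(* Let $\alpha\in(0,1)$ be irrational, and let $A_n,B_n,C_n$ be as defined in the context, so that $P_{q_n}(\alpha)=A_nB_nC_n$. Let $(\tau_n)_{n\in\mathbb N}$ and $(\kappa_n)_{n\in\mathbb N}$ be eventually increasing sequences of natural numbers with $\tau_n,\kappa_n=O(q_n^{1/2})$. Then for all sufficiently large $n$, $$A_n=2\pi c_n\big(1+O(\Lambda_n^2)\big),$$ $$\log(B_n)=-2\pi^2\frac{c_n}{q_n^2}\sum_{t=1}^{M_n-1}\frac{D_t(\alpha_n^-)}{\sin(\pi t/q_n)\sin(\pi(t+1)/q_n)}-2\sum_{t=1}^{\tau_n}\sum_{j=2}^{\tau_n}\frac1j\Big(\frac{c_n\xi_{nt}}{t}\Big)^j+O(\tau_n^{-1}),$$ $$C_n=\prod_{t=1}^{\kappa_n}\Big(1-\frac1{4(t/c_n-\xi_{nt})^2}\Big)+O(\kappa_n^{-1}).$$ Here $M_n=\lfloor(q_n-1)/2\rfloor$, and $\xi_{nt}=\{tq_{n-1}/q_n\}-\frac12$ for $t\in\{0,\ldots,q_n-1\}$.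
   Context: Continued fraction and convergent notation: - $\alpha=[0;a_1,a_2,\ldots]$. - $q_0=0$, $q_1=1$, $q_{n+1}=a_nq_n+q_{n-1}$, and $p_0=1$, $p_1=0$, $p_{n+1}=a_np_n+p_{n-1}$. - $\Lambda_n=q_n\alpha-p_n$. - $\alpha_n^+=[a_n;a_{n+1},\ldots]$ and $\alpha_n^-=[0;a_{n-1},\ldots,a_1]=q_{n-1}/q_n$. - $c_n=1/(\alpha_n^++\alpha_n^-)$. - $D_t(\beta)=\sum_{s=1}^t(\{\beta s\}-\frac12)$. The three factors: - $P_N(\alpha)=\prod_{r=1}^N|2\sin(\pi r\alpha)|$. - $s_{nt}=2\sin\big(\pi[t/q_n-|\Lambda_n|(\{tq_{n-1}/q_n\}-\frac12)]\big)$. - $A_n=|2q_n\sin(\pi\Lambda_n)|$. - $B_n=\big|\prod_{t=1}^{q_n-1}\frac{s_{nt}}{2\sin(\pi t/q_n)}\big|$. - $C_n=\prod_{t=1}^{q_n-1}\big(1-s_{n0}^2/s_{nt}^2\big)^{1/2}$. The $O$-terms have constants independent of $n$. *)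

From Stdlib Require Import Reals Lra Lia List ZArith.
Import ListNotations.
Open Scope R_scope.

(* Finite sum / product over the integer range a..b (empty if b < a). *)
Definition sumR (a b : nat) (f : nat -> R) : R :=
  fold_right Rplus 0 (map f (seq a (S b - a))).
Definition prodR (a b : nat) (f : nat -> R) : R :=
  fold_right Rmult 1 (map f (seq a (S b - a))).

Definition frac (x : R) : R := frac_part x.

Fixpoint gauss_x (al : R) (k : nat) : R :=
  match k with
  | O => al
  | S k' => frac (/ gauss_x al k')
  end.

(* Partial quotients: al = [0; a_1, a_2, ...], a_n = floor (1 / x_(n-1)) (n >= 1). *)
Definition cf_a (al : R) (n : nat) : nat := Z.to_nat (Int_part (/ gauss_x al (pred n))).

Fixpoint conv_pair (al : R) (u0 u1 : nat) (n : nat) : nat * nat :=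
  match n with
  | O => (u0, u1)
  | S k => let (x, y) := conv_pair al u0 u1 k in (y, cf_a al (S k) * y + x)%nat
  end.

(* q_0 = 0, q_1 = 1, p_0 = 1, p_1 = 0. *)
Definition cf_q (al : R) (n : nat) : nat := fst (conv_pair al 0 1 n).
Definition cf_p (al : R) (n : nat) : nat := fst (conv_pair al 1 0 n).

Definition Lambda (al : R) (n : nat) : R := INR (cf_q al n) * al - INR (cf_p al n).

(* alpha_n^+ = [a_n; a_(n+1), ...] = 1 / x_(n-1);  alpha_n^- = q_(n-1)/q_n *)
Definition alpha_plus (al : R) (n : nat) : R := / gauss_x al (pred n).
Definition alpha_minus (al : R) (n : nat) : R := INR (cf_q al (pred n)) / INR (cf_q al n).

Definition c_n (al : R) (n : nat) : R := / (alpha_plus al n + alpha_minus al n).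

Definition Dt (t : nat) (beta : R) : R := sumR 1 t (fun s => frac (beta * INR s) - / 2).

Definition xi (al : R) (n t : nat) : R :=
  frac (INR t * INR (cf_q al (pred n)) / INR (cf_q al n)) - / 2.

Definition s_nt (al : R) (n t : nat) : R :=
  2 * sin (PI * (INR t / INR (cf_q al n) - Rabs (Lambda al n) * xi al n t)).

Definition A_n (al : R) (n : nat) : R := Rabs (2 * INR (cf_q al n) * sin (PI * Lambda al n)).

Definition B_n (al : R) (n : nat) : R :=
  Rabs (prodR 1 (cf_q al n - 1) (fun t => s_nt al n t / (2 * sin (PI * INR t / INR (cf_q al n))))).

Definition C_n (al : R) (n : nat) : R :=
  prodR 1 (cf_q al n - 1) (fun t => sqrt (1 - (s_nt al n 0) ^ 2 / (s_nt al n t) ^ 2)).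

Definition P_N (N : nat) (al : R) : R := prodR 1 N (fun r => Rabs (2 * sin (PI * INR r * al))).

Definition M_n (al : R) (n : nat) : nat := ((cf_q al n - 1) / 2)%nat.

Definition logB_main (al : R) (tau : nat -> nat) (n : nat) : R :=
  - 2 * PI ^ 2 * c_n al n / INR (cf_q al n) ^ 2 *
    sumR 1 (M_n al n - 1) (fun t =>
      Dt t (alpha_minus al n) /
      (sin (PI * INR t / INR (cf_q al n)) * sin (PI * INR (S t) / INR (cf_q al n))))
  - 2 * sumR 1 (tau n) (fun t => sumR 2 (tau n) (fun j =>
      / INR j * (c_n al n * xi al n t / INR t) ^ j)).

Definition C_main (al : R) (kappa : nat -> nat) (n : nat) : R :=
  prodR 1 (kappa n) (fun t => 1 - / (4 * (INR t / c_n al n - xi al n t) ^ 2)).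

Definition eventually_increasing (u : nat -> nat) : Prop :=
  exists N, forall n, (N <= n)%nat -> (u n < u (S n))%nat.

Definition bigO_sqrt_q (al : R) (u : nat -> nat) : Prop :=
  exists K N, forall n, (N <= n)%nat -> INR (u n) <= K * sqrt (INR (cf_q al n)).

(* Write q = q_n, L = |Lambda_n| = c_n / q_n and theta_t = PI t / q. Then A_n = 2 q sin(PI L), and
   sin x = x + O(x^3) gives the first estimate. The t-th factor of B_n is
   sin(theta_t - PI L xi_t) / sin theta_t, whose logarithm is -PI L xi_t cot theta_t + O(1/t^2) near the
   ends of [1, q-1]. Both B_n and C_n are symmetric under t -> q - t, because the fractional part of
   t q_(n-1)/q_n never vanishes, so only t <= q/2 matters. Summation by parts turns the sum of the
   first-order terms into the D_t sum of the statement. For t <= tau_n the logarithm equals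
   ln(1 - w_t) + w_t with w_t = c_n xi_t / t up to O(tau_n/q^2), i.e. minus the truncated series
   sum_(j >= 2) w_t^j / j up to O(2^-tau_n), while the range tau_n < t < q - tau_n contributes O(1/tau_n).
   For C_n the factors with t <= kappa_n agree with those of the main term up to O(1/q^2), and the others
   are 1 - O(1/t^2 + 1/(q-t)^2). The hypothesis tau_n, kappa_n = O(q^(1/2)) makes the accumulated
   errors O(tau_n^2 / q^2) = O(1/tau_n). *)

From Stdlib Require Import Reals ZArith.
From Stdlib Require Import Lra Lia Psatz List.
Open Scope R_scope.

(** * Sums and products over integer ranges *)

Section RangeFold.

Variables (op : R -> R -> R) (e : R).
Hypothesis op_assoc : forall x y z, op (op x y) z = op x (op y z).
Hypothesis op_comm : forall x y, op x y = op y x.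
Hypothesis op_e_l : forall x, op e x = x.

Definition rfold (a n : nat) (f : nat -> R) : R := fold_right op e (map f (seq a n)).

Lemma rfold_cons a n f : rfold a (S n) f = op (f a) (rfold (S a) n f).
Proof. reflexivity. Qed.

Lemma rfold_ext a n f g :
  (forall i, (a <= i < a + n)%nat -> f i = g i) -> rfold a n f = rfold a n g.
Proof.
  revert a; induction n as [|n IH]; intros a Hfg; [reflexivity|].
  rewrite !rfold_cons, (Hfg a), (IH (S a)); [reflexivity | intros; apply Hfg; lia | lia].
Qed.

Lemma rfold_app a n m f : rfold a (n + m) f = op (rfold a n f) (rfold (a + n) m f).
Proof.
  unfold rfold. rewrite seq_app, map_app, fold_right_app.
  generalize (fold_right op e (map f (seq (a + n) m))) as z.
  induction (seq a n) as [|x l IH]; intro z; simpl; [now rewrite op_e_l|].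
  now rewrite IH, op_assoc.
Qed.

Lemma rfold_snoc a n f : rfold a (S n) f = op (rfold a n f) (f (a + n)%nat).
Proof.
  replace (S n) with (n + 1)%nat by lia. rewrite rfold_app. unfold rfold at 2; simpl.
  now rewrite (op_comm _ e), op_e_l.
Qed.

Lemma rfold_reflect a n c F : (a + n <= c + 1)%nat ->
  rfold a n (fun i => F (c - i)%nat) = rfold (c + 1 - a - n) n F.
Proof.
  revert a; induction n as [|n IH]; intros a Hn; [reflexivity|].
  rewrite rfold_cons, IH, rfold_snoc by lia.
  replace (c + 1 - S a - n)%nat with (c + 1 - a - S n)%nat by lia.
  replace (c + 1 - a - S n + n)%nat with (c - a)%nat by lia.
  apply op_comm.
Qed.

(* The block [q-k, q-1] is the mirror image of [1, k]. *)
Lemma rfold_palindrome q k g : (2 * k + 1 <= q)%nat ->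
  (forall t, (1 <= t <= q - 1)%nat -> g (q - t)%nat = g t) ->
  rfold 1 (q - 1) g = op (op (rfold 1 k g) (rfold 1 k g)) (rfold (k + 1) (q - 1 - 2 * k) g).
Proof.
  intros Hk Hg.
  replace (q - 1)%nat with (k + (q - 1 - 2 * k) + k)%nat at 1 by lia.
  rewrite !rfold_app.
  replace (1 + (k + (q - 1 - 2 * k)))%nat with (q - k)%nat by lia.
  replace (1 + k)%nat with (k + 1)%nat by lia.
  assert (Hmirror : rfold (q - k) k g = rfold 1 k g).
  { rewrite (rfold_ext _ _ g (fun i => g (q - i)%nat)).
    - rewrite rfold_reflect by lia. f_equal; lia.
    - intros i Hi. symmetry. apply Hg. lia. }
  rewrite Hmirror, (op_comm (op _ _) (rfold 1 k g)), <- op_assoc. reflexivity.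
Qed.

End RangeFold.

Definition rsum := rfold Rplus 0.
Definition rprod := rfold Rmult 1.

Lemma sumR_rsum a b f : sumR a b f = rsum a (S b - a) f.
Proof. reflexivity. Qed.

Lemma prodR_rprod a b f : prodR a b f = rprod a (S b - a) f.
Proof. reflexivity. Qed.

Lemma rsum_0 a f : rsum a 0 f = 0.
Proof. reflexivity. Qed.

Lemma rsum_cons a n f : rsum a (S n) f = f a + rsum (S a) n f.
Proof. reflexivity. Qed.

Lemma rsum_snoc a n f : rsum a (S n) f = rsum a n f + f (a + n)%nat.
Proof. exact (rfold_snoc _ _ Rplus_assoc Rplus_comm Rplus_0_l a n f). Qed.

Lemma rsum_ext a n f g :
  (forall i, (a <= i < a + n)%nat -> f i = g i) -> rsum a n f = rsum a n g.
Proof. exact (rfold_ext _ _ a n f g). Qed.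

Lemma rsum_reflect a n c F : (a + n <= c + 1)%nat ->
  rsum a n (fun i => F (c - i)%nat) = rsum (c + 1 - a - n) n F.
Proof. exact (rfold_reflect _ _ Rplus_assoc Rplus_comm Rplus_0_l a n c F). Qed.

Lemma rsum_palindrome q k g : (2 * k + 1 <= q)%nat ->
  (forall t, (1 <= t <= q - 1)%nat -> g (q - t)%nat = g t) ->
  rsum 1 (q - 1) g = 2 * rsum 1 k g + rsum (k + 1) (q - 1 - 2 * k) g.
Proof.
  intros Hk Hg. unfold rsum.
  rewrite (rfold_palindrome _ _ Rplus_assoc Rplus_comm Rplus_0_l q k g Hk Hg). ring.
Qed.

Lemma rsum_plus a n f g : rsum a n (fun i => f i + g i) = rsum a n f + rsum a n g.
Proof. revert a; induction n as [|n IH]; intro a; [rewrite !rsum_0; ring|]. rewrite !rsum_cons, IH. ring. Qed.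

Lemma rsum_minus a n f g : rsum a n (fun i => f i - g i) = rsum a n f - rsum a n g.
Proof. revert a; induction n as [|n IH]; intro a; [rewrite !rsum_0; ring|]. rewrite !rsum_cons, IH. ring. Qed.

Lemma rsum_scal a n k f : rsum a n (fun i => k * f i) = k * rsum a n f.
Proof. revert a; induction n as [|n IH]; intro a; [rewrite !rsum_0; ring|]. rewrite !rsum_cons, IH. ring. Qed.

Lemma rsum_const a n k : rsum a n (fun _ => k) = INR n * k.
Proof. revert a; induction n as [|n IH]; intro a; [rewrite rsum_0; simpl; ring|]. rewrite rsum_cons, IH, S_INR. ring. Qed.

Lemma rsum_le a n f g :
  (forall i, (a <= i < a + n)%nat -> f i <= g i) -> rsum a n f <= rsum a n g.
Proof.
  revert a; induction n as [|n IH]; intros a Hfg; [rewrite !rsum_0; lra|]. rewrite !rsum_cons.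
  apply Rplus_le_compat; [apply Hfg; lia | apply IH; intros; apply Hfg; lia].
Qed.

Lemma rsum_abs a n f : Rabs (rsum a n f) <= rsum a n (fun i => Rabs (f i)).
Proof.
  revert a; induction n as [|n IH]; intro a; [rewrite !rsum_0, Rabs_R0; lra|]. rewrite !rsum_cons.
  eapply Rle_trans; [apply Rabs_triang | apply Rplus_le_compat_l, IH].
Qed.

Lemma rsum_bound a n f B :
  (forall i, (a <= i < a + n)%nat -> Rabs (f i) <= B) -> Rabs (rsum a n f) <= INR n * B.
Proof.
  intro Hf. rewrite <- rsum_const with (a := a).
  eapply Rle_trans; [apply rsum_abs | apply rsum_le; auto].
Qed.

Lemma rsum_telescope a n h : rsum a n (fun i => h (S i) - h i) = h (a + n)%nat - h a.
Proof.
  induction n as [|n IH]; [rewrite rsum_0, Nat.add_0_r; ring|].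
  rewrite rsum_snoc, IH, Nat.add_succ_r. ring.
Qed.

Lemma rsum_by_parts m (x C : nat -> R) :
  let D t := rsum 1 t x in
  rsum 1 (S m) (fun t => x t * C t) = D (S m) * C (S m) + rsum 1 m (fun t => D t * (C t - C (S t))).
Proof.
  intro D. induction m as [|m IH]; [unfold D; rewrite !rsum_cons, !rsum_0; ring|].
  rewrite rsum_snoc, IH, rsum_snoc. unfold D. rewrite (rsum_snoc 1 (S m) x).
  replace (1 + S m)%nat with (S (S m)) by lia. replace (1 + m)%nat with (S m) by lia. ring.
Qed.

Lemma rsum_inv_sq_le a n : (2 <= a)%nat -> rsum a n (fun t => / INR t ^ 2) <= / INR (a - 1).
Proof.
  intro Ha.
  assert (Htel : rsum a n (fun t => / INR t ^ 2)
                 <= rsum a n (fun t => (fun s => - / INR (s - 1)) (S t) - (fun s => - / INR (s - 1)) t)).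
  { apply rsum_le. intros i Hi. cbv beta. rewrite Nat.sub_succ, Nat.sub_0_r.
    assert (1 <= INR (i - 1)) by (apply (le_INR 1); lia).
    rewrite minus_INR in * by lia. change (INR 1) with 1 in *.
    replace (- / INR i - - / (INR i - 1)) with (/ ((INR i - 1) * INR i)) by (field; lra).
    apply Rinv_le_contravar; nra. }
  rewrite rsum_telescope in Htel. cbv beta in Htel.
  assert (0 < / INR (a + n - 1)) by (apply Rinv_0_lt_compat, lt_0_INR; lia). lra.
Qed.

Lemma rsum_inv_sq_rev_le a n q : (1 <= a)%nat -> (a + n + 1 <= q)%nat ->
  rsum a n (fun t => / (INR q - INR t) ^ 2) <= / INR (q - a - n).
Proof.
  intros Ha Hq.
  rewrite <- (rsum_ext a n (fun t => (fun s => / INR s ^ 2) (q - t)%nat)).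
  2:{ intros i Hi. rewrite minus_INR by lia. reflexivity. }
  rewrite (rsum_reflect a n q (fun s => / INR s ^ 2)) by lia.
  replace (q - a - n)%nat with (q + 1 - a - n - 1)%nat by lia.
  apply rsum_inv_sq_le. lia.
Qed.

Lemma rprod_0 a f : rprod a 0 f = 1.
Proof. reflexivity. Qed.

Lemma rprod_cons a n f : rprod a (S n) f = f a * rprod (S a) n f.
Proof. reflexivity. Qed.

Lemma rprod_ext a n f g :
  (forall i, (a <= i < a + n)%nat -> f i = g i) -> rprod a n f = rprod a n g.
Proof. exact (rfold_ext _ _ a n f g). Qed.

Lemma rprod_palindrome q k g : (2 * k + 1 <= q)%nat ->
  (forall t, (1 <= t <= q - 1)%nat -> g (q - t)%nat = g t) ->
  rprod 1 (q - 1) g = rprod 1 k g * rprod 1 k g * rprod (k + 1) (q - 1 - 2 * k) g.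
Proof. exact (rfold_palindrome _ _ Rmult_assoc Rmult_comm Rmult_1_l q k g). Qed.

Lemma rprod_mult a n f g : rprod a n (fun i => f i * g i) = rprod a n f * rprod a n g.
Proof. revert a; induction n as [|n IH]; intro a; [rewrite !rprod_0; ring|]. rewrite !rprod_cons, IH. ring. Qed.

Lemma rprod_const_1 a n : rprod a n (fun _ => 1) = 1.
Proof. revert a; induction n as [|n IH]; intro a; [reflexivity|]. rewrite rprod_cons, IH. ring. Qed.

Lemma rprod_pos a n f : (forall i, (a <= i < a + n)%nat -> 0 < f i) -> 0 < rprod a n f.
Proof.
  revert a; induction n as [|n IH]; intros a Hf; [rewrite rprod_0; lra|]. rewrite rprod_cons.
  apply Rmult_lt_0_compat; [apply Hf; lia | apply IH; intros; apply Hf; lia].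
Qed.

Lemma rprod_unit_interval a n f :
  (forall i, (a <= i < a + n)%nat -> 0 <= f i <= 1) -> 0 <= rprod a n f <= 1.
Proof.
  revert a; induction n as [|n IH]; intros a Hf; [rewrite rprod_0; lra|]. rewrite rprod_cons.
  assert (0 <= f a <= 1) by (apply Hf; lia).
  assert (0 <= rprod (S a) n f <= 1) by (apply IH; intros; apply Hf; lia). nra.
Qed.

Lemma ln_rprod a n f :
  (forall i, (a <= i < a + n)%nat -> 0 < f i) -> ln (rprod a n f) = rsum a n (fun i => ln (f i)).
Proof.
  revert a; induction n as [|n IH]; intros a Hf; [apply ln_1|]. rewrite rprod_cons, rsum_cons.
  rewrite ln_mult, IH; [reflexivity | intros; apply Hf; lia | apply Hf; lia |].
  apply rprod_pos. intros; apply Hf; lia.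
Qed.

Lemma rprod_diff_le a n f g :
  (forall i, (a <= i < a + n)%nat -> 0 <= f i <= 1 /\ 0 <= g i <= 1) ->
  Rabs (rprod a n f - rprod a n g) <= rsum a n (fun i => Rabs (f i - g i)).
Proof.
  revert a; induction n as [|n IH]; intros a Hfg; [rewrite !rprod_0, rsum_0, Rminus_diag, Rabs_R0; lra|].
  rewrite !rprod_cons, rsum_cons.
  assert (Ha : 0 <= f a <= 1 /\ 0 <= g a <= 1) by (apply Hfg; lia).
  assert (IHa : Rabs (rprod (S a) n f - rprod (S a) n g) <= rsum (S a) n (fun i => Rabs (f i - g i)))
    by (apply IH; intros; apply Hfg; lia).
  assert (Hg : 0 <= rprod (S a) n g <= 1) by (apply rprod_unit_interval; intros; apply Hfg; lia).
  replace (f a * rprod (S a) n f - g a * rprod (S a) n g) with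
    (f a * (rprod (S a) n f - rprod (S a) n g) + (f a - g a) * rprod (S a) n g) by ring.
  eapply Rle_trans; [apply Rabs_triang|]. rewrite !Rabs_mult.
  rewrite (Rabs_pos_eq (f a)), (Rabs_pos_eq (rprod _ _ g)) by lra.
  generalize (Rabs_pos (f a - g a)) (Rabs_pos (rprod (S a) n f - rprod (S a) n g)). nra.
Qed.

Lemma PI_3_4 : 3 < PI <= 4.
Proof. split; [generalize PI2_3_2; lra | apply PI_4]. Qed.

Lemma Rabs_triang3 a b c : Rabs (a + b + c) <= Rabs a + Rabs b + Rabs c.
Proof. generalize (Rabs_triang (a + b) c) (Rabs_triang a b). lra. Qed.

Lemma sin_le_id x : 0 <= x -> sin x <= x.
Proof. intro Hx. destruct (Req_dec x 0) as [->|]; [rewrite sin_0; lra | left; apply sin_lt_x; lra]. Qed.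

Lemma sin_ge_cubic x : 0 <= x <= PI -> x - x ^ 3 / 6 <= sin x.
Proof.
  intro Hx. destruct (SIN x) as [Hlb _]; try lra.
  unfold sin_lb, sin_approx, sin_term in Hlb; simpl in Hlb.
  assert (x <= 4) by (generalize PI_3_4; lra).
  assert (0 <= x ^ 5 * (42 - x ^ 2)) by (apply Rmult_le_pos; [apply pow_le; lra | nra]).
  nra.
Qed.

Lemma sin_ge_third x : 0 <= x <= PI / 2 -> x / 3 <= sin x.
Proof.
  intro Hx. generalize PI_3_4 (sin_ge_cubic x ltac:(lra)). intros HPI Hs. nra.
Qed.

Lemma Rabs_sin_le x : Rabs (sin x) <= Rabs x.
Proof.
  assert (Hpos : forall y, 0 <= y -> Rabs (sin y) <= y).
  { intros y Hy. generalize PI_3_4; intro. apply Rabs_le. split; [|now apply sin_le_id].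
    destruct (Rle_lt_dec y PI); [generalize (sin_ge_0 y Hy r) | generalize (SIN_bound y)]; lra. }
  destruct (Rle_lt_dec 0 x).
  - rewrite (Rabs_pos_eq x) by lra. auto.
  - rewrite <- (Rabs_Ropp x), <- Rabs_Ropp, <- sin_neg, (Rabs_pos_eq (- x)) by lra.
    apply Hpos. lra.
Qed.

Lemma cos_quadratic_bounds x : 1 - x ^ 2 / 2 <= cos x <= 1.
Proof.
  split; [|generalize (COS_bound x); lra].
  replace (cos x) with (cos (2 * (x / 2))) by (f_equal; field). rewrite cos_2a_sin.
  assert (Hs : Rabs (sin (x / 2)) * Rabs (sin (x / 2)) <= Rabs (x / 2) * Rabs (x / 2))
    by (apply Rmult_le_compat; try apply Rabs_pos; apply Rabs_sin_le).
  rewrite <- !Rabs_mult, !Rabs_pos_eq in Hs; nra.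
Qed.

Lemma Rabs_1_sub_cos_le x : Rabs (1 - cos x) <= x ^ 2 / 2.
Proof. generalize (cos_quadratic_bounds x). intro. rewrite Rabs_pos_eq; lra. Qed.

Lemma id_sub_sin_bounds x : 0 <= x <= PI -> 0 <= x - sin x <= x ^ 3 / 6.
Proof. intro Hx. generalize (sin_le_id x (proj1 Hx)) (sin_ge_cubic x Hx). lra. Qed.

Lemma Rabs_sin_sub_id_le x : Rabs x <= 3 -> Rabs (sin x - x) <= Rabs x ^ 3 / 6.
Proof.
  intro Hx. generalize PI_3_4; intro.
  destruct (Rle_lt_dec 0 x).
  - rewrite (Rabs_pos_eq x) in * by lra. generalize (id_sub_sin_bounds x ltac:(lra)). intro.
    rewrite Rabs_minus_sym, Rabs_pos_eq; lra.
  - rewrite (Rabs_left x) in * by lra. generalize (id_sub_sin_bounds (- x) ltac:(lra)).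
    rewrite sin_neg. intro. rewrite Rabs_pos_eq; lra.
Qed.

Lemma sq_sub_sin_sq_bounds a : 0 <= a <= 2 -> 0 <= a ^ 2 - sin a ^ 2 <= a ^ 4 / 3.
Proof.
  intro Ha. generalize PI_3_4 (id_sub_sin_bounds a ltac:(generalize PI_3_4; lra)). intros HPI Hs.
  assert (0 <= sin a) by (apply sin_ge_0; lra).
  replace (a ^ 2 - sin a ^ 2) with ((a - sin a) * (a + sin a)) by ring. split; nra.
Qed.

Lemma id_mul_cos_le_sin x : 0 < x <= PI / 2 -> x * cos x <= sin x.
Proof.
  intro Hx. generalize PI_3_4; intro.
  assert (Hcos : cos x <= 1 - x ^ 2 / 2 + x ^ 4 / 24).
  { replace (cos x) with (cos (2 * (x / 2))) by (f_equal; field). rewrite cos_2a_sin.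
    generalize (sin_ge_cubic (x / 2) ltac:(lra)). intro.
    assert (0 <= x / 2 - (x / 2) ^ 3 / 6) by nra. nra. }
  generalize (sin_ge_cubic x ltac:(lra)). intro.
  assert (x * cos x <= x * (1 - x ^ 2 / 2 + x ^ 4 / 24)) by (apply Rmult_le_compat_l; lra).
  assert (x ^ 5 <= 8 * x ^ 3)
    by (replace (x ^ 5) with (x ^ 3 * x ^ 2) by ring; assert (0 <= x ^ 3) by (apply pow_le; lra); nra).
  nra.
Qed.

Definition cot (x : R) : R := cos x / sin x.

Lemma cot_bounds x : 0 < x <= PI / 2 -> 0 <= cot x <= / x /\ Rabs (cot x - / x) <= 2 * x.
Proof.
  intro Hx. generalize PI_3_4; intro.
  assert (Hs : x / 3 <= sin x) by (apply sin_ge_third; lra).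
  assert (0 <= cos x) by (apply cos_ge_0; lra).
  generalize (id_mul_cos_le_sin x Hx) (cos_quadratic_bounds x) (sin_le_id x ltac:(lra)).
  intros Hxc Hc Hsx.
  unfold cot. split; [split|].
  - apply Rmult_le_pos; [lra | left; apply Rinv_0_lt_compat; lra].
  - apply Rmult_le_reg_l with (x * sin x); [nra|].
    replace (x * sin x * (cos x / sin x)) with (x * cos x) by (field; lra).
    replace (x * sin x * / x) with (sin x) by (field; lra). lra.
  - replace (cos x / sin x - / x) with (- ((sin x - x * cos x) / (x * sin x))) by (field; lra).
    rewrite Rabs_Ropp, Rabs_pos_eq by (apply Rmult_le_pos; [lra | left; apply Rinv_0_lt_compat; nra]).
    apply Rmult_le_reg_l with (x * sin x); [nra|].
    replace (x * sin x * ((sin x - x * cos x) / (x * sin x))) with (sin x - x * cos x) by (field; lra).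
    assert (sin x - x * cos x <= x ^ 3 / 2) by nra. nra.
Qed.

Lemma cot_PI_minus x : cot (PI - x) = - cot x.
Proof. unfold cot. rewrite sin_PI_x, cos_minus, cos_PI, sin_PI. unfold Rdiv. ring. Qed.

Lemma cot_sub_cot a b : sin a <> 0 -> sin b <> 0 -> cot a - cot b = sin (b - a) / (sin a * sin b).
Proof. intros. unfold cot. rewrite sin_minus. field. auto. Qed.

Lemma sin_sub_div_sin x d : 0 < sin x -> sin (x - d) / sin x = 1 - (sin d * cot x + (1 - cos d)).
Proof. intro. unfold cot. rewrite sin_minus. field. lra. Qed.

Lemma ln_le_sub_1 x : 0 < x -> ln x <= x - 1.
Proof.
  intro Hx. rewrite <- (ln_exp (x - 1)).
  destruct (Req_dec x (exp (x - 1))) as [E|E]; [rewrite <- E; lra|].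
  left. apply ln_increasing; auto. generalize (exp_ineq1_le (x - 1)). lra.
Qed.

Lemma ln_lipschitz a b m : 0 < m -> m <= a -> m <= b -> Rabs (ln a - ln b) <= Rabs (a - b) / m.
Proof.
  intros Hm Ha Hb.
  assert (Hone : forall u v, m <= u -> m <= v -> ln u - ln v <= Rabs (u - v) / m).
  { intros u v Hu Hv.
    replace (ln u - ln v) with (ln (u / v))
      by (unfold Rdiv; rewrite ln_mult, ln_Rinv; try apply Rinv_0_lt_compat; lra).
    eapply Rle_trans; [apply ln_le_sub_1, Rdiv_lt_0_compat; lra|].
    replace (u / v - 1) with ((u - v) / v) by (field; lra).
    apply Rle_trans with (Rabs (u - v) / v).
    - apply Rmult_le_compat_r; [left; apply Rinv_0_lt_compat; lra | apply Rle_abs].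
    - apply Rmult_le_compat_l; [apply Rabs_pos | apply Rinv_le_contravar; lra]. }
  apply Rabs_le. split.
  - rewrite Rabs_minus_sym. generalize (Hone b a Hb Ha). lra.
  - apply Hone; auto.
Qed.

(** * The logarithmic series *)

Definition log_series_rem (N : nat) (z : R) : R := ln (1 - z) + rsum 1 N (fun j => / INR j * z ^ j).

Lemma derivable_pt_lim_pow_series a n z : (1 <= a)%nat ->
  derivable_pt_lim (fun z => rsum a n (fun j => / INR j * z ^ j)) z (rsum a n (fun j => z ^ pred j)).
Proof.
  revert a; induction n as [|n IH]; intros a Ha; [apply derivable_pt_lim_const|].
  apply (derivable_pt_lim_plus (fun z => / INR a * z ^ a) (fun z => rsum (S a) n (fun j => / INR j * z ^ j))).
  - replace (z ^ pred a) with (/ INR a * (INR a * z ^ pred a)) by (field; apply not_0_INR; lia).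
    apply (derivable_pt_lim_scal (fun z => z ^ a)), derivable_pt_lim_pow.
  - apply IH. lia.
Qed.

Lemma geom_rsum N z : rsum 1 N (fun j => z ^ pred j) * (1 - z) = 1 - z ^ N.
Proof.
  induction N as [|N IH]; [rewrite rsum_0; ring|].
  rewrite rsum_snoc, Rmult_plus_distr_r, IH. simpl. ring.
Qed.

Lemma derivable_pt_lim_log_series_rem N z : z < 1 ->
  derivable_pt_lim (log_series_rem N) z (- z ^ N / (1 - z)).
Proof.
  intro Hz.
  replace (- z ^ N / (1 - z)) with (/ (1 - z) * (0 - 1) + rsum 1 N (fun j => z ^ pred j)).
  2:{ apply Rmult_eq_reg_r with (1 - z); [|lra].
      rewrite Rmult_plus_distr_r, geom_rsum. field. lra. }
  apply (derivable_pt_lim_plus (fun z => ln (1 - z)) (fun z => rsum 1 N (fun j => / INR j * z ^ j))).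
  - apply (derivable_pt_lim_comp (fun z => 1 - z) ln).
    + apply (derivable_pt_lim_minus (fun _ => 1) (fun z => z));
        [apply derivable_pt_lim_const | apply derivable_pt_lim_id].
    + apply derivable_pt_lim_ln. lra.
  - apply derivable_pt_lim_pow_series. lia.
Qed.

Lemma log_series_rem_0 N : log_series_rem N 0 = 0.
Proof.
  unfold log_series_rem. rewrite Rminus_0_r, ln_1, (rsum_ext _ _ _ (fun _ => 0)).
  - rewrite rsum_const. ring.
  - intros [|i] Hi; [lia|]. simpl. ring.
Qed.

Lemma log_series_rem_1 z : log_series_rem 1 z = ln (1 - z) + z.
Proof. unfold log_series_rem. rewrite rsum_cons, rsum_0. simpl. field. Qed.

(* Mean value theorem: the derivative -c^N/(1-c) is at most 4|z|^N between 0 and z. *)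
Lemma log_series_rem_bound N z : Rabs z <= 3 / 4 -> Rabs (log_series_rem N z) <= 4 * Rabs z ^ (N + 1).
Proof.
  intro Hz.
  assert (Hd : forall c, Rabs c <= Rabs z -> Rabs (- c ^ N / (1 - c)) <= 4 * Rabs z ^ N).
  { intros c Hc. assert (1 - c >= 1 / 4) by (generalize (Rle_abs c); lra).
    unfold Rdiv. rewrite Rabs_mult, Rabs_Ropp, Rabs_inv, (Rabs_pos_eq (1 - c)), <- RPow_abs by lra.
    assert (Rabs c ^ N <= Rabs z ^ N) by (apply pow_incr; split; [apply Rabs_pos | auto]).
    assert (/ (1 - c) <= 4) by (replace 4 with (/ (1 / 4)) by field; apply Rinv_le_contravar; lra).
    assert (0 <= Rabs c ^ N) by (apply pow_le, Rabs_pos).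
    assert (0 < / (1 - c)) by (apply Rinv_0_lt_compat; lra). nra. }
  assert (Hmvt : forall a b, a < b -> (a = 0 \/ b = 0) -> Rabs a <= 3 / 4 -> Rabs b <= 3 / 4 ->
            exists c, Rabs (log_series_rem N b - log_series_rem N a) = Rabs (- c ^ N / (1 - c)) * (b - a)
                      /\ Rabs c <= Rabs (b - a)).
  { intros a b Hab Hab0 Ha Hb.
    destruct (MVT_cor2 (log_series_rem N) (fun c => - c ^ N / (1 - c)) a b Hab) as [c [Hc1 Hc2]].
    { intros c Hc. apply derivable_pt_lim_log_series_rem.
      generalize (Rle_abs a) (Rle_abs b); lra. }
    exists c. rewrite Hc1, Rabs_mult, (Rabs_pos_eq (b - a)) by lra. split; [reflexivity|].
    apply Rabs_le. destruct Hab0 as [-> | ->]; lra. }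
  rewrite pow_add, pow_1, <- Rmult_assoc.
  assert (0 <= Rabs z) by apply Rabs_pos.
  destruct (Rtotal_order z 0) as [Hlt | [-> | Hgt]].
  - destruct (Hmvt z 0 Hlt (or_intror eq_refl) Hz ltac:(rewrite Rabs_R0; lra)) as [c [Hc1 Hc2]].
    rewrite log_series_rem_0, Rminus_0_l, Rabs_Ropp, Rminus_0_l in Hc1.
    rewrite Rminus_0_l, Rabs_Ropp in Hc2.
    rewrite Hc1. apply Rmult_le_compat; [apply Rabs_pos | lra | auto | rewrite Rabs_left; lra].
  - rewrite log_series_rem_0, Rabs_R0. generalize (pow_le 0 N (Rle_refl 0)). lra.
  - destruct (Hmvt 0 z Hgt (or_introl eq_refl) ltac:(rewrite Rabs_R0; lra) Hz) as [c [Hc1 Hc2]].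
    rewrite log_series_rem_0, !Rminus_0_r in Hc1. rewrite Rminus_0_r in Hc2.
    rewrite Hc1. apply Rmult_le_compat; [apply Rabs_pos | lra | auto | rewrite Rabs_pos_eq; lra].
Qed.

Lemma sq_le_pow2 n : (n * n <= 2 ^ (n + 1))%nat.
Proof.
  induction n as [|n IH]; [simpl; lia|].
  destruct (Nat.le_gt_cases n 2) as [Hn|Hn].
  - destruct n as [|[|[|]]]; simpl; lia.
  - rewrite Nat.add_succ_l, Nat.pow_succ_r'. nia.
Qed.

Lemma INR_mul_pow_half_le n : (1 <= n)%nat -> INR n * (4 * (1 / 2) ^ (n + 1)) <= 4 / INR n.
Proof.
  intro Hn. assert (1 <= INR n) by (apply (le_INR 1); lia).
  assert (H2 : INR n * INR n <= 2 ^ (n + 1)).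
  { rewrite <- mult_INR. replace 2 with (INR 2) by reflexivity. rewrite <- pow_INR. apply le_INR, sq_le_pow2. }
  replace ((1 / 2) ^ (n + 1)) with (/ 2 ^ (n + 1)) by (rewrite <- pow_inv; f_equal; field).
  assert (0 < 2 ^ (n + 1)) by (apply pow_lt; lra).
  apply Rmult_le_reg_r with (INR n * 2 ^ (n + 1)); [nra|].
  replace (INR n * (4 * / 2 ^ (n + 1)) * (INR n * 2 ^ (n + 1))) with (4 * (INR n * INR n)) by (field; lra).
  replace (4 / INR n * (INR n * 2 ^ (n + 1))) with (4 * 2 ^ (n + 1)) by (field; lra). lra.
Qed.

(** * Estimates for a single factor *)

Lemma sq_ratio_sub_sin_sq_ratio_le a y : 0 < a <= y -> y <= PI / 2 ->
  Rabs (a ^ 2 / y ^ 2 - sin a ^ 2 / sin y ^ 2) <= 4 * a ^ 2.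
Proof.
  intros Ha Hy. generalize PI_3_4; intro.
  assert (Hsy : y / 3 <= sin y) by (apply sin_ge_third; lra).
  assert (Hsa : 0 <= sin a <= a) by (split; [apply sin_ge_0 | apply sin_le_id]; lra).
  generalize (sq_sub_sin_sq_bounds a ltac:(lra)) (sq_sub_sin_sq_bounds y ltac:(lra)). intros Da Dy.
  assert (Hy2 : 0 < y ^ 2) by (apply pow_lt; lra).
  assert (Hsy2 : (y / 3) ^ 2 <= sin y ^ 2) by (apply pow_incr; lra).
  set (u := (a ^ 2 - sin a ^ 2) / y ^ 2).
  set (v := (y ^ 2 - sin y ^ 2) / (y ^ 2 * sin y ^ 2)).
  replace (a ^ 2 / y ^ 2 - sin a ^ 2 / sin y ^ 2) with (u - sin a ^ 2 * v) by (unfold u, v; field; lra).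
  assert (Hu : 0 <= u <= a ^ 2 / 3).
  { unfold u. split; [apply Rle_mult_inv_pos; lra|].
    apply Rmult_le_reg_r with (y ^ 2); [lra|].
    replace ((a ^ 2 - sin a ^ 2) / y ^ 2 * y ^ 2) with (a ^ 2 - sin a ^ 2) by (field; lra).
    assert (a ^ 2 <= y ^ 2) by (apply pow_incr; lra).
    assert (0 <= a ^ 2) by (apply pow_le; lra). nra. }
  assert (Hv : 0 <= v <= 3).
  { unfold v. assert (0 < y ^ 2 * sin y ^ 2) by (apply Rmult_lt_0_compat; [|apply pow_lt]; lra).
    split; [apply Rle_mult_inv_pos; lra|].
    apply Rmult_le_reg_r with (y ^ 2 * sin y ^ 2); [lra|].
    replace ((y ^ 2 - sin y ^ 2) / (y ^ 2 * sin y ^ 2) * (y ^ 2 * sin y ^ 2)) with (y ^ 2 - sin y ^ 2)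
      by (field; lra).
    replace (y ^ 4) with (9 * (y ^ 2 * (y / 3) ^ 2)) in Dy by field. nra. }
  assert (0 <= sin a ^ 2 <= a ^ 2) by (split; [apply pow_le | apply pow_incr]; lra).
  apply Rabs_le. nra.
Qed.

Lemma Rabs_sin_mul_cot_le x d : 0 < x <= PI / 2 -> Rabs (sin d * cot x) <= Rabs (d / x).
Proof.
  intro Hx. destruct (cot_bounds x Hx) as [[Hc0 Hc1] _].
  unfold Rdiv. rewrite !Rabs_mult, (Rabs_pos_eq (cot x)), (Rabs_pos_eq (/ x)) by (auto; left; apply Rinv_0_lt_compat; lra).
  apply Rmult_le_compat; auto using Rabs_pos, Rabs_sin_le.
Qed.

Lemma Rabs_sin_sub_mul_cot_le x d : 0 < x <= PI / 2 -> Rabs d <= 3 -> Rabs (d / x) <= 1 / 2 ->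
  Rabs ((sin d - d) * cot x) <= d ^ 2 / 12.
Proof.
  intros Hx Hd Hdx. destruct (cot_bounds x Hx) as [[Hc0 Hc1] _].
  rewrite Rabs_mult, (Rabs_pos_eq (cot x)) by lra.
  apply Rle_trans with (Rabs d ^ 3 / 6 * / x);
    [apply Rmult_le_compat; auto using Rabs_pos, Rabs_sin_sub_id_le|].
  replace (Rabs d ^ 3 / 6 * / x) with (Rabs d ^ 2 / 6 * Rabs (d / x))
    by (unfold Rdiv; rewrite Rabs_mult, Rabs_inv, (Rabs_pos_eq x) by lra; ring).
  rewrite pow2_abs. generalize (pow2_ge_0 d). nra.
Qed.

(* Writing sin(x-d)/sin x = 1 - v with v = sin d cot x + (1 - cos d), the left side is
   log_series_rem 1 v plus terms of order d^2. *)
Lemma ln_sin_shift_ratio_bound x d : 0 < x <= PI / 2 -> Rabs d <= 1 / 50 -> Rabs (d / x) <= 1 / 2 ->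
  Rabs (ln (sin (x - d) / sin x) + d * cot x) <= 4 * (Rabs (d / x) + d ^ 2 / 2) ^ 2 + d ^ 2.
Proof.
  intros Hx Hd Hdx. generalize PI_3_4; intro.
  assert (Hsx : 0 < sin x) by (generalize (sin_ge_third x ltac:(lra)); lra).
  assert (Hd2 : d ^ 2 <= 1 / 2500) by (rewrite <- pow2_abs; generalize (Rabs_pos d); nra).
  set (v := sin d * cot x + (1 - cos d)).
  assert (Hv : Rabs v <= Rabs (d / x) + d ^ 2 / 2).
  { unfold v. eapply Rle_trans; [apply Rabs_triang|].
    generalize (Rabs_sin_mul_cot_le x d Hx) (Rabs_1_sub_cos_le d). lra. }
  replace (ln (sin (x - d) / sin x) + d * cot x)
    with (log_series_rem 1 v + - ((sin d - d) * cot x) + - (1 - cos d))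
    by (rewrite log_series_rem_1, sin_sub_div_sin by lra; unfold v; ring).
  generalize (log_series_rem_bound 1 v ltac:(lra)) (Rabs_sin_sub_mul_cot_le x d Hx ltac:(lra) Hdx)
    (Rabs_1_sub_cos_le d). simpl (1 + 1)%nat. intros Hrem Hsd Hcd.
  assert (Rabs v ^ 2 <= (Rabs (d / x) + d ^ 2 / 2) ^ 2) by (apply pow_incr; split; [apply Rabs_pos | lra]).
  eapply Rle_trans; [apply Rabs_triang3|]. rewrite !Rabs_Ropp.
  generalize (pow2_ge_0 d). lra.
Qed.

(* Here v is compared with w = d/x, using |cot x - 1/x| <= 2x. *)
Lemma ln_sin_shift_ratio_approx x d : 0 < x <= PI / 2 -> Rabs d <= 1 / 50 -> Rabs (d / x) <= 1 / 2 ->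
  d ^ 2 + 2 * Rabs d * x <= 1 / 5 ->
  Rabs (ln (sin (x - d) / sin x) + d * cot x - (ln (1 - d / x) + d / x)) <= 6 * (d ^ 2 + 2 * Rabs d * x).
Proof.
  intros Hx Hd Hdx Hsmall. generalize PI_3_4; intro.
  assert (Hsx : 0 < sin x) by (generalize (sin_ge_third x ltac:(lra)); lra).
  destruct (cot_bounds x Hx) as [_ Hcot].
  set (v := sin d * cot x + (1 - cos d)). set (w := d / x).
  assert (Hdcot : Rabs (d * (cot x - / x)) <= 2 * Rabs d * x).
  { rewrite Rabs_mult. generalize (Rabs_pos d). nra. }
  assert (Hvw : Rabs (v - w) <= d ^ 2 + 2 * Rabs d * x).
  { replace (v - w) with ((sin d - d) * cot x + d * (cot x - / x) + (1 - cos d)) by (unfold v, w; field; lra).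
    generalize (Rabs_sin_sub_mul_cot_le x d Hx ltac:(lra) Hdx) (Rabs_1_sub_cos_le d) (pow2_ge_0 d).
    intros. eapply Rle_trans; [apply Rabs_triang3 | lra]. }
  assert (Hw : 1 / 2 <= 1 - w) by (generalize (Rle_abs w); unfold w; lra).
  assert (Hv : 1 / 4 <= 1 - v) by (generalize (Rle_abs (v - w)); lra).
  replace (ln (sin (x - d) / sin x) + d * cot x - (ln (1 - w) + w))
    with ((ln (1 - v) - ln (1 - w)) + d * (cot x - / x))
    by (rewrite sin_sub_div_sin by lra; unfold v, w; field; lra).
  generalize (ln_lipschitz (1 - v) (1 - w) (1 / 4) ltac:(lra) Hv ltac:(lra)).
  replace (1 - v - (1 - w)) with (- (v - w)) by ring. rewrite Rabs_Ropp. intro Hln.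
  eapply Rle_trans; [apply Rabs_triang|].
  replace (Rabs (v - w) / (1 / 4)) with (4 * Rabs (v - w)) in Hln by field.
  generalize (pow2_ge_0 d) (Rmult_le_pos _ _ (Rabs_pos d) (Rlt_le _ _ (proj1 Hx))). lra.
Qed.

(** * The factors of B_n and C_n for a fixed denominator *)

Lemma half_pred_bounds q : (1 <= q)%nat ->
  (2 * ((q - 1) / 2) + 1 <= q <= 2 * ((q - 1) / 2) + 2)%nat.
Proof. intro Hq. generalize (Nat.div_mod (q - 1) 2) (Nat.mod_upper_bound (q - 1) 2). lia. Qed.

Section Factors.

Variables (q r : nat) (c L : R).
Hypothesis q_ge_100 : (100 <= q)%nat.
Hypothesis c_bounds : 0 < c < 1.
Hypothesis L_def : L = c / INR q.
Hypothesis frac_reflect :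
  forall t, (1 <= t <= q - 1)%nat -> frac (INR (q - t) * INR r / INR q) = 1 - frac (INR t * INR r / INR q).

(* For q = q_n and r = q_(n-1), [saw t] is the paper's xi_(n t) and L plays |Lambda_n|. *)
Definition saw (t : nat) : R := frac (INR t * INR r / INR q) - / 2.
Definition theta (t : nat) : R := PI * INR t / INR q.
Definition phi (t : nat) : R := PI * (INR t / INR q - L * saw t).

Lemma INR_q_ge_100 : 100 <= INR q.
Proof. apply (le_INR 100) in q_ge_100. simpl in q_ge_100. lra. Qed.

Lemma INR_range t : (1 <= t <= q - 1)%nat -> 1 <= INR t <= INR q - 1.
Proof.
  intro Ht. split; [apply (le_INR 1); lia|].
  replace (INR q - 1) with (INR (q - 1)) by (rewrite minus_INR by lia; reflexivity).
  apply le_INR. lia.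
Qed.

Lemma L_bounds : 0 < L /\ L * INR q = c /\ L < / INR q.
Proof.
  generalize INR_q_ge_100; intro. subst L. split; [|split].
  - apply Rdiv_lt_0_compat; lra.
  - field. lra.
  - rewrite <- (Rmult_1_l (/ INR q)). apply Rmult_lt_compat_r; [apply Rinv_0_lt_compat|]; lra.
Qed.

Lemma saw_bounds t : - / 2 <= saw t < / 2.
Proof. unfold saw, frac. destruct (base_fp (INR t * INR r / INR q)). lra. Qed.

Lemma Rabs_saw_le t : Rabs (saw t) <= / 2.
Proof. generalize (saw_bounds t). intro. apply Rabs_le. lra. Qed.

Lemma saw_0 : saw 0 = - / 2.
Proof. unfold saw, frac. rewrite Rmult_0_l, Rdiv_0_l, fp_R0. ring. Qed.

Lemma saw_reflect t : (1 <= t <= q - 1)%nat -> saw (q - t) = - saw t.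
Proof. intro Ht. unfold saw. rewrite frac_reflect by auto. lra. Qed.

Lemma theta_reflect t : (t <= q)%nat -> theta (q - t) = PI - theta t.
Proof. intro Ht. unfold theta. rewrite minus_INR by lia. generalize INR_q_ge_100. intro. field. lra. Qed.

Lemma phi_reflect t : (1 <= t <= q - 1)%nat -> phi (q - t) = PI - phi t.
Proof.
  intro Ht. unfold phi. rewrite saw_reflect, minus_INR by lia. generalize INR_q_ge_100. intro.
  field. lra.
Qed.

Lemma phi_0 : phi 0 = PI * L / 2.
Proof. unfold phi. rewrite saw_0. simpl. field. apply not_0_INR. lia. Qed.

Lemma phi_eq t : phi t = theta t - PI * L * saw t.
Proof. unfold phi, theta. unfold Rdiv. ring. Qed.

Lemma phi_bounds t : PI * (INR t / INR q - L / 2) <= phi t <= PI * (INR t / INR q + L / 2).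
Proof.
  unfold phi. generalize (saw_bounds t) L_bounds PI_3_4. intros Hs [HL _] HPI.
  split; apply Rmult_le_compat_l; nra.
Qed.

Lemma sin_phi_0_bounds : 0 < sin (PI * L / 2) <= 2 / INR q.
Proof.
  generalize L_bounds PI_3_4 INR_q_ge_100. intros [HL [HLq HLinv]] HPI Hq.
  assert (L <= / 100) by (apply Rle_trans with (/ INR q); [lra | apply Rinv_le_contravar; lra]).
  split; [apply sin_gt_0; nra|].
  eapply Rle_trans; [apply sin_le_id; nra|].
  apply Rmult_le_reg_r with (INR q); [lra|].
  replace (2 / INR q * INR q) with 2 by (field; lra). nra.
Qed.

Lemma phi_inner t : (1 <= t <= q - 1)%nat -> PI * L / 2 <= phi t <= PI - PI * L / 2.
Proof.
  intro Ht. generalize (phi_bounds t) L_bounds PI_3_4 INR_q_ge_100 (INR_range t Ht).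
  intros [H1 H2] [HL [HLq HLinv]] HPI Hq Htq.
  assert (L * INR q < 1) by lra.
  assert (INR t / INR q >= 1 / INR q) by (apply Rle_ge, Rmult_le_compat_r; [left; apply Rinv_0_lt_compat|]; lra).
  assert (INR t / INR q <= 1 - 1 / INR q).
  { replace (1 - 1 / INR q) with ((INR q - 1) / INR q) by (field; lra).
    apply Rmult_le_compat_r; [left; apply Rinv_0_lt_compat|]; lra. }
  split; nra.
Qed.

Lemma sin_phi_ge t : (1 <= t <= q - 1)%nat -> sin (PI * L / 2) <= sin (phi t).
Proof.
  intro Ht. generalize (phi_inner t Ht) L_bounds PI_3_4. intros [H1 H2] [HL _] HPI.
  assert (0 < PI * L / 2) by nra.
  destruct (Rle_lt_dec (phi t) (PI / 2)).
  - apply sin_incr_1; lra.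
  - rewrite <- (sin_PI_x (phi t)). apply sin_incr_1; lra.
Qed.

Lemma sin_phi_pos t : (1 <= t <= q - 1)%nat -> 0 < sin (phi t).
Proof. intro Ht. generalize (sin_phi_ge t Ht) sin_phi_0_bounds. lra. Qed.

Lemma sin_phi_lower t : (1 <= t <= q - 1)%nat ->
  INR t / (2 * INR q) <= sin (phi t) \/ (INR q - INR t) / (2 * INR q) <= sin (phi t).
Proof.
  intro Ht. generalize (phi_bounds t) L_bounds PI_3_4 INR_q_ge_100 (phi_inner t Ht) (INR_range t Ht).
  intros [H1 H2] [HL [HLq HLinv]] HPI Hq [H3 H4] Htq.
  assert (L * INR q < 1) by lra.
  destruct (Rle_lt_dec (phi t) (PI / 2)).
  - left. generalize (sin_ge_third (phi t) ltac:(lra)). intro.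
    assert (phi t >= PI * (INR t / (2 * INR q))).
    { eapply Rge_trans; [apply Rle_ge, H1|]. apply Rle_ge, Rmult_le_compat_l; [lra|].
      apply Rmult_le_reg_r with (2 * INR q); [lra|].
      replace ((INR t / INR q - L / 2) * (2 * INR q)) with (2 * INR t - L * INR q) by (field; lra).
      replace (INR t / (2 * INR q) * (2 * INR q)) with (INR t) by (field; lra). lra. }
    assert (0 <= INR t / (2 * INR q)) by (apply Rle_mult_inv_pos; lra). nra.
  - right. rewrite <- (sin_PI_x (phi t)). generalize (sin_ge_third (PI - phi t) ltac:(lra)). intro.
    assert (PI - phi t >= PI * ((INR q - INR t) / (2 * INR q))).
    { apply Rge_trans with (PI - PI * (INR t / INR q + L / 2)); [lra|].
      replace (PI - PI * (INR t / INR q + L / 2))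
        with (PI * ((2 * INR q - 2 * INR t - L * INR q) / (2 * INR q))) by (field; lra).
      apply Rle_ge, Rmult_le_compat_l; [lra|].
      apply Rmult_le_compat_r; [left; apply Rinv_0_lt_compat|]; lra. }
    assert (0 <= (INR q - INR t) / (2 * INR q)) by (apply Rle_mult_inv_pos; lra). nra.
Qed.

Lemma sin_phi_ratio_le t : (1 <= t <= q - 1)%nat ->
  sin (PI * L / 2) ^ 2 / sin (phi t) ^ 2 <= 16 / INR t ^ 2 + 16 / (INR q - INR t) ^ 2.
Proof.
  intro Ht. generalize sin_phi_0_bounds INR_q_ge_100 (sin_phi_pos t Ht) (INR_range t Ht).
  intros [Ha1 Ha2] Hq Hphi Htq.
  assert (Ha : sin (PI * L / 2) ^ 2 <= (2 / INR q) ^ 2) by (apply pow_incr; lra).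
  assert (0 < 16 / INR t ^ 2) by (apply Rdiv_lt_0_compat; [lra | apply pow_lt; lra]).
  assert (0 < 16 / (INR q - INR t) ^ 2) by (apply Rdiv_lt_0_compat; [lra | apply pow_lt; lra]).
  assert (Hm : forall m, 0 < m -> m / (2 * INR q) <= sin (phi t) ->
                 sin (PI * L / 2) ^ 2 / sin (phi t) ^ 2 <= 16 / m ^ 2).
  { intros m Hm Hs. apply Rmult_le_reg_r with (sin (phi t) ^ 2); [apply pow_lt; lra|].
    replace (sin (PI * L / 2) ^ 2 / sin (phi t) ^ 2 * sin (phi t) ^ 2) with (sin (PI * L / 2) ^ 2)
      by (field; lra).
    assert ((m / (2 * INR q)) ^ 2 <= sin (phi t) ^ 2)
      by (apply pow_incr; split; [apply Rle_mult_inv_pos|]; lra).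
    replace ((2 / INR q) ^ 2) with (16 / m ^ 2 * (m / (2 * INR q)) ^ 2) in Ha by (field; lra).
    eapply Rle_trans; [exact Ha|].
    apply Rmult_le_compat_l; [left; apply Rdiv_lt_0_compat; [lra | apply pow_lt; lra] | auto]. }
  destruct (sin_phi_lower t Ht) as [Hs | Hs]; [generalize (Hm (INR t) ltac:(lra) Hs) | generalize (Hm (INR q - INR t) ltac:(lra) Hs)]; lra.
Qed.

Lemma theta_range t : (1 <= t <= q - 1)%nat -> 0 < theta t < PI.
Proof.
  intro Ht. generalize (INR_range t Ht) INR_q_ge_100 PI_3_4. intros [H1 H2] Hq HPI. unfold theta.
  split; [apply Rdiv_lt_0_compat; nra|].
  apply Rmult_lt_reg_r with (INR q); [lra|]. unfold Rdiv. rewrite Rmult_assoc, Rinv_l by lra. nra.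
Qed.

Lemma sin_theta_pos t : (1 <= t <= q - 1)%nat -> 0 < sin (theta t).
Proof. intro Ht. apply sin_gt_0; apply theta_range; auto. Qed.

Lemma theta_le_PI2 t : (2 * t <= q)%nat -> theta t <= PI / 2.
Proof.
  intro Ht. generalize INR_q_ge_100 PI_3_4. intros Hq HPI. unfold theta.
  assert (2 * INR t <= INR q) by (rewrite <- (mult_INR 2); apply le_INR; lia).
  apply Rmult_le_reg_r with (INR q); [lra|]. unfold Rdiv. rewrite Rmult_assoc, Rinv_l by lra. nra.
Qed.


Definition rho (t : nat) : R := 2 * sin (phi t) / (2 * sin (theta t)).
Definition u (t : nat) : R := PI * L * saw t * cot (theta t).
Definition E (t : nat) : R := ln (rho t) + u t.
Definition D (t : nat) : R := rsum 1 t saw.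
Definition half_q : nat := ((q - 1) / 2)%nat.
Definition abel_sum : R := rsum 1 (half_q - 1) (fun t => D t / (sin (theta t) * sin (theta (S t)))).

Lemma rho_eq t : (1 <= t <= q - 1)%nat -> rho t = sin (theta t - PI * L * saw t) / sin (theta t).
Proof. intro Ht. unfold rho. rewrite phi_eq. generalize (sin_theta_pos t Ht). intro. field. lra. Qed.

Lemma rho_pos t : (1 <= t <= q - 1)%nat -> 0 < rho t.
Proof.
  intro Ht. unfold rho. generalize (sin_theta_pos t Ht) (sin_phi_pos t Ht). intros.
  apply Rdiv_lt_0_compat; lra.
Qed.

Lemma rho_reflect t : (1 <= t <= q - 1)%nat -> rho (q - t) = rho t.
Proof. intro Ht. unfold rho. rewrite phi_reflect, theta_reflect, !sin_PI_x by lia. reflexivity. Qed.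

Lemma u_reflect t : (1 <= t <= q - 1)%nat -> u (q - t) = u t.
Proof. intro Ht. unfold u. rewrite theta_reflect, cot_PI_minus, saw_reflect by lia. ring. Qed.

Lemma E_reflect t : (1 <= t <= q - 1)%nat -> E (q - t) = E t.
Proof. intro Ht. unfold E. rewrite rho_reflect, u_reflect by auto. reflexivity. Qed.

Lemma Rabs_D_le t : Rabs (D t) <= INR t / 2.
Proof. unfold D. eapply Rle_trans; [apply rsum_bound with (B := / 2); intros; apply Rabs_saw_le | lra]. Qed.

Lemma half_q_bounds : (2 * half_q + 1 <= q <= 2 * half_q + 2)%nat.
Proof. apply half_pred_bounds. lia. Qed.

Lemma INR_half_q_bounds : 2 * INR half_q + 1 <= INR q <= 2 * INR half_q + 2.
Proof.
  generalize half_q_bounds. intros [H1 H2]. apply le_INR in H1, H2.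
  rewrite plus_INR, mult_INR in H1, H2. simpl in H1, H2. lra.
Qed.

(* u vanishes at t = q/2 (cot (PI/2) = 0) and is symmetric, so its sum is twice the sum over
   [1, half_q], which summation by parts turns into D and differences of cotangents. *)
Lemma sum_u_by_parts :
  rsum 1 (q - 1) u = 2 * (PI * L * (D half_q * cot (theta half_q) + sin (PI / INR q) * abel_sum)).
Proof.
  generalize half_q_bounds INR_q_ge_100. intros [HM1 HM2] Hq.
  rewrite (rsum_palindrome q half_q u HM1 u_reflect).
  replace (rsum (half_q + 1) (q - 1 - 2 * half_q) u) with 0.
  2:{ rewrite (rsum_ext _ _ _ (fun _ => 0)); [rewrite rsum_const; ring|].
      intros i Hi. assert (Hi2 : (2 * i = q)%nat) by lia.
      unfold u, cot, theta. replace (PI * INR i / INR q) with (PI / 2).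
      - rewrite cos_PI2. unfold Rdiv. ring.
      - rewrite <- Hi2, mult_INR. simpl. field. apply not_0_INR. lia. }
  replace half_q with (S (half_q - 1)) at 1 by lia.
  unfold u. rewrite (rsum_ext 1 (S (half_q - 1)) _ (fun t => PI * L * (saw t * cot (theta t)))) by (intros; ring).
  rewrite rsum_scal, rsum_by_parts. fold (D (S (half_q - 1))). replace (S (half_q - 1)) with half_q by lia.
  unfold abel_sum. rewrite <- rsum_scal.
  rewrite (rsum_ext 1 (half_q - 1) (fun t => rsum 1 t saw * (cot (theta t) - cot (theta (S t))))
             (fun t => sin (PI / INR q) * (D t / (sin (theta t) * sin (theta (S t)))))).
  - ring.
  - intros i Hi. fold (D i).
    assert (sin (theta i) <> 0) by (apply Rgt_not_eq, sin_theta_pos; lia).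
    assert (sin (theta (S i)) <> 0) by (apply Rgt_not_eq, sin_theta_pos; lia).
    rewrite cot_sub_cot by auto.
    replace (theta (S i) - theta i) with (PI / INR q) by (unfold theta; rewrite S_INR; field; lra).
    field. auto.
Qed.

Lemma Rabs_cot_theta_half_le : Rabs (cot (theta half_q)) <= 12 / INR q.
Proof.
  generalize half_q_bounds INR_q_ge_100 PI_3_4. intros [HM1 HM2] Hq HPI.
  generalize INR_half_q_bounds. intros [HMr1 HMr2].
  assert (Hx : PI / 2 - PI / INR q <= theta half_q <= PI / 2 - PI / (2 * INR q)).
  { unfold theta. split; apply Rmult_le_reg_r with (2 * INR q); try lra.
    - replace ((PI / 2 - PI / INR q) * (2 * INR q)) with (PI * (INR q - 2)) by (field; lra).
      replace (PI * INR half_q / INR q * (2 * INR q)) with (PI * (2 * INR half_q)) by (field; lra).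
      apply Rmult_le_compat_l; lra.
    - replace ((PI / 2 - PI / (2 * INR q)) * (2 * INR q)) with (PI * (INR q - 1)) by (field; lra).
      replace (PI * INR half_q / INR q * (2 * INR q)) with (PI * (2 * INR half_q)) by (field; lra).
      apply Rmult_le_compat_l; lra. }
  assert (HPq : PI / INR q <= 4 / 100).
  { apply Rmult_le_reg_r with (INR q); [lra|]. unfold Rdiv. rewrite Rmult_assoc, Rinv_l by lra. nra. }
  assert (0 < PI / (2 * INR q)) by (apply Rdiv_lt_0_compat; lra).
  assert (Hs : theta half_q / 3 <= sin (theta half_q)) by (apply sin_ge_third; lra).
  assert (Hcos : 0 <= cos (theta half_q) <= PI / INR q).
  { rewrite <- sin_shift. split; [apply sin_ge_0; lra|]. eapply Rle_trans; [apply sin_le_id|]; lra. }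
  unfold cot, Rdiv. rewrite Rabs_mult, Rabs_inv, (Rabs_pos_eq (cos _)), (Rabs_pos_eq (sin _)) by lra.
  apply Rle_trans with (PI / INR q * 3).
  - apply Rmult_le_compat; try lra; [left; apply Rinv_0_lt_compat; lra|].
    replace 3 with (/ (1 / 3)) by field. apply Rinv_le_contravar; lra.
  - unfold Rdiv. replace (12 * / INR q) with (4 * / INR q * 3) by ring.
    apply Rmult_le_compat_r; [lra|]. apply Rmult_le_compat_r; [left; apply Rinv_0_lt_compat|]; lra.
Qed.

Lemma sin_theta_ge t : (1 <= t)%nat -> (2 * t <= q)%nat -> INR t / INR q <= sin (theta t).
Proof.
  intros Ht Htq. generalize INR_q_ge_100 PI_3_4. intros Hq HPI.
  eapply Rle_trans; [|apply sin_ge_third; split; [left; apply theta_range; lia | apply theta_le_PI2; lia]].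
  unfold theta. replace (PI * INR t / INR q / 3) with ((INR t / INR q) * (PI / 3)) by (field; lra).
  assert (0 <= INR t / INR q) by (apply Rle_mult_inv_pos; [apply pos_INR | lra]).
  rewrite <- (Rmult_1_r (INR t / INR q)) at 1. apply Rmult_le_compat_l; lra.
Qed.

Lemma Rabs_abel_sum_le : Rabs abel_sum <= INR q ^ 3 / 4.
Proof.
  generalize half_q_bounds INR_q_ge_100. intros [HM1 HM2] Hq.
  unfold abel_sum. eapply Rle_trans; [apply rsum_bound with (B := INR q ^ 2 / 2)|].
  - intros i Hi. assert (Hi1 : 1 <= INR i) by (apply (le_INR 1); lia).
    generalize (sin_theta_ge i ltac:(lia) ltac:(lia)) (sin_theta_ge (S i) ltac:(lia) ltac:(lia)).
    rewrite S_INR. intros Hs1 Hs2.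
    assert (INR i / INR q <= (INR i + 1) / INR q)
      by (apply Rmult_le_compat_r; [left; apply Rinv_0_lt_compat|]; lra).
    assert (0 < INR i / INR q) by (apply Rdiv_lt_0_compat; lra).
    unfold Rdiv at 1. rewrite Rabs_mult, Rabs_inv, Rabs_mult, (Rabs_pos_eq (sin (theta i))),
      (Rabs_pos_eq (sin (theta (S i)))) by lra.
    apply Rle_trans with (INR i / 2 * / (INR i / INR q * (INR i / INR q))).
    + apply Rmult_le_compat; [apply Rabs_pos | left; apply Rinv_0_lt_compat; nra | apply Rabs_D_le |].
      apply Rinv_le_contravar; [nra|]. apply Rmult_le_compat; lra.
    + replace (INR i / 2 * / (INR i / INR q * (INR i / INR q))) with (INR q ^ 2 / 2 / INR i) by (field; lra).
      unfold Rdiv. rewrite Rmult_assoc. apply Rmult_le_compat_l; [apply pow_le; lra|].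
      rewrite <- (Rmult_1_r (/ 2)) at 2. apply Rmult_le_compat_l; [lra|].
      rewrite <- Rinv_1. apply Rinv_le_contravar; lra.
  - assert (INR (half_q - 1) <= INR q / 2).
    { rewrite minus_INR by lia. generalize INR_half_q_bounds. simpl. lra. }
    replace (INR q ^ 3 / 4) with (INR q / 2 * (INR q ^ 2 / 2)) by field.
    apply Rmult_le_compat_r; [apply Rmult_le_pos; [apply pow_le|]; lra | lra].
Qed.

Lemma Rabs_sin_PI_div_q_sub_le : Rabs (sin (PI / INR q) - PI / INR q) <= 11 / INR q ^ 3.
Proof.
  generalize INR_q_ge_100 PI_3_4. intros Hq HPI.
  assert (0 <= PI / INR q) by (apply Rle_mult_inv_pos; lra).
  eapply Rle_trans; [apply Rabs_sin_sub_id_le; rewrite Rabs_pos_eq by lra|].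
  - apply Rmult_le_reg_r with (INR q); [lra|]. unfold Rdiv. rewrite Rmult_assoc, Rinv_l by lra. nra.
  - rewrite Rabs_pos_eq by lra.
    replace ((PI / INR q) ^ 3 / 6) with (PI ^ 3 / 6 / INR q ^ 3) by (field; lra).
    apply Rmult_le_compat_r; [left; apply Rinv_0_lt_compat, pow_lt; lra|].
    assert (PI ^ 3 <= 4 ^ 3) by (apply pow_incr; lra). lra.
Qed.

(* The paper's main term is the summation by parts with sin(PI/q) replaced by PI/q;
   the boundary term D cot is O(1/q). *)
Lemma first_order_sum_approx :
  Rabs (- rsum 1 (q - 1) u - (-2 * PI ^ 2 * c / INR q ^ 2 * abel_sum)) <= 50 / INR q.
Proof.
  generalize INR_q_ge_100 PI_3_4 L_bounds c_bounds half_q_bounds.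
  intros Hq HPI [HL [HLq HLinv]] Hc [HM1 HM2].
  rewrite sum_u_by_parts.
  replace (- (2 * (PI * L * (D half_q * cot (theta half_q) + sin (PI / INR q) * abel_sum)))
           - -2 * PI ^ 2 * c / INR q ^ 2 * abel_sum)
    with (- (2 * PI * L) * (D half_q * cot (theta half_q))
          - (2 * PI * L) * ((sin (PI / INR q) - PI / INR q) * abel_sum))
    by (rewrite <- HLq; field; lra).
  assert (HPL : 0 < 2 * PI * L <= 8 / INR q).
  { split; [nra|]. apply Rmult_le_reg_r with (INR q); [lra|].
    replace (8 / INR q * INR q) with 8 by (field; lra). nra. }
  assert (HD : Rabs (D half_q) <= INR q / 4).
  { eapply Rle_trans; [apply Rabs_D_le|]. generalize INR_half_q_bounds. lra. }
  generalize Rabs_cot_theta_half_le Rabs_abel_sum_le Rabs_sin_PI_div_q_sub_le. intros Hcot HS Hsin.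
  assert (Hb1 : Rabs (D half_q * cot (theta half_q)) <= 3).
  { rewrite Rabs_mult. replace 3 with (INR q / 4 * (12 / INR q)) by (field; lra).
    apply Rmult_le_compat; auto using Rabs_pos. }
  assert (Hb2 : Rabs ((sin (PI / INR q) - PI / INR q) * abel_sum) <= 11 / 4).
  { rewrite Rabs_mult. replace (11 / 4) with (11 / INR q ^ 3 * (INR q ^ 3 / 4)) by (field; lra).
    apply Rmult_le_compat; auto using Rabs_pos. }
  assert (T1 : Rabs (- (2 * PI * L) * (D half_q * cot (theta half_q))) <= 8 / INR q * 3).
  { rewrite Rabs_mult, Rabs_Ropp, (Rabs_pos_eq (2 * PI * L)) by lra.
    apply Rmult_le_compat; auto using Rabs_pos; lra. }
  assert (T2 : Rabs (2 * PI * L * ((sin (PI / INR q) - PI / INR q) * abel_sum)) <= 8 / INR q * (11 / 4)).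
  { rewrite Rabs_mult, (Rabs_pos_eq (2 * PI * L)) by lra.
    apply Rmult_le_compat; auto using Rabs_pos; lra. }
  eapply Rle_trans; [apply Rabs_triang|]. rewrite Rabs_Ropp.
  assert (0 < / INR q) by (apply Rinv_0_lt_compat; lra).
  unfold Rdiv in *. lra.
Qed.

Definition w (t : nat) : R := c * saw t / INR t.

Lemma Rabs_phi_shift_le t : Rabs (PI * L * saw t) <= 2 / INR q.
Proof.
  generalize INR_q_ge_100 PI_3_4 L_bounds (Rabs_saw_le t). intros Hq HPI [HL [HLq HLinv]] Hs.
  rewrite Rabs_mult, (Rabs_pos_eq (PI * L)) by nra.
  apply Rle_trans with (PI * L * / 2); [apply Rmult_le_compat_l; nra|].
  apply Rmult_le_reg_r with (INR q); [lra|].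
  replace (2 / INR q * INR q) with 2 by (field; lra).
  replace (PI * L * / 2 * INR q) with (PI * (L * INR q) / 2) by field. nra.
Qed.

Lemma Rabs_phi_shift_small t : Rabs (PI * L * saw t) <= 1 / 50.
Proof.
  generalize (Rabs_phi_shift_le t) INR_q_ge_100. intros Hd Hq.
  eapply Rle_trans; [exact Hd|]. apply Rmult_le_reg_r with (INR q); [lra|].
  replace (2 / INR q * INR q) with 2 by (field; lra). lra.
Qed.

Lemma Rabs_w_le t : (1 <= t)%nat -> Rabs (w t) <= / (2 * INR t).
Proof.
  intro Ht. generalize (Rabs_saw_le t). intro Hs. assert (1 <= INR t) by (apply (le_INR 1); lia).
  unfold w, Rdiv. rewrite !Rabs_mult, Rabs_inv, (Rabs_pos_eq c), (Rabs_pos_eq (INR t)) by lra.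
  rewrite Rinv_mult. apply Rmult_le_compat_r; [left; apply Rinv_0_lt_compat; lra|].
  generalize (Rabs_pos (saw t)). nra.
Qed.

Lemma phi_shift_div_theta t : (1 <= t)%nat -> PI * L * saw t / theta t = w t.
Proof.
  intro Ht. generalize INR_q_ge_100 PI_3_4 L_bounds. intros Hq HPI [_ [HLq _]].
  assert (1 <= INR t) by (apply (le_INR 1); lia). unfold w, theta. rewrite <- HLq. field. lra.
Qed.

Lemma theta_small t : (1 <= t)%nat -> (2 * t <= q)%nat ->
  0 < theta t <= PI / 2 /\ Rabs (PI * L * saw t / theta t) <= 1 / 2.
Proof.
  intros Ht Htq. assert (1 <= INR t) by (apply (le_INR 1); lia).
  split; [split; [apply theta_range; lia | apply theta_le_PI2; lia]|].
  rewrite phi_shift_div_theta by lia. eapply Rle_trans; [apply Rabs_w_le; lia|].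
  replace (1 / 2) with (/ 2) by field. apply Rinv_le_contravar; lra.
Qed.

Lemma Rabs_E_le_small t : (1 <= t)%nat -> (2 * t <= q)%nat -> Rabs (E t) <= 6 / INR t ^ 2.
Proof.
  intros Ht Htq. generalize INR_q_ge_100. intro Hq. assert (1 <= INR t) by (apply (le_INR 1); lia).
  assert (2 * INR t <= INR q) by (rewrite <- (mult_INR 2); apply le_INR; lia).
  destruct (theta_small t Ht Htq) as [Hx Hdx].
  unfold E, u. rewrite rho_eq by lia.
  eapply Rle_trans; [apply ln_sin_shift_ratio_bound; auto; apply Rabs_phi_shift_small|].
  set (d := PI * L * saw t) in *.
  assert (Hd2 : d ^ 2 <= / INR t ^ 2).
  { rewrite <- pow2_abs, <- pow_inv. apply pow_incr. split; [apply Rabs_pos|].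
    eapply Rle_trans; [apply Rabs_phi_shift_le|].
    apply Rmult_le_reg_r with (INR q * INR t); [nra|].
    replace (2 / INR q * (INR q * INR t)) with (2 * INR t) by (field; lra).
    replace (/ INR t * (INR q * INR t)) with (INR q) by (field; lra). lra. }
  assert (Hinv : 0 < / INR t <= 1) by (split; [apply Rinv_0_lt_compat | rewrite <- Rinv_1; apply Rinv_le_contravar]; lra).
  assert (Hs : Rabs (d / theta t) + d ^ 2 / 2 <= / INR t).
  { unfold d. rewrite phi_shift_div_theta by lia. fold d.
    generalize (Rabs_w_le t Ht). rewrite Rinv_mult. intro.
    assert (/ INR t ^ 2 <= / INR t) by (rewrite <- pow_inv; simpl; nra). lra. }
  assert ((Rabs (d / theta t) + d ^ 2 / 2) ^ 2 <= (/ INR t) ^ 2)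
    by (apply pow_incr; generalize (Rabs_pos (d / theta t)) (pow2_ge_0 d); lra).
  rewrite pow_inv in *. assert (0 < / INR t ^ 2) by (apply Rinv_0_lt_compat, pow_lt; lra).
  replace (6 / INR t ^ 2) with (6 * / INR t ^ 2) by reflexivity. lra.
Qed.

Lemma Rabs_E_le t : (1 <= t <= q - 1)%nat -> Rabs (E t) <= 6 * / INR t ^ 2 + 6 * / (INR q - INR t) ^ 2.
Proof.
  intro Ht. generalize (INR_range t Ht). intro Hr.
  assert (0 < / INR t ^ 2) by (apply Rinv_0_lt_compat, pow_lt; lra).
  assert (0 < / (INR q - INR t) ^ 2) by (apply Rinv_0_lt_compat, pow_lt; lra).
  destruct (Nat.le_gt_cases (2 * t) q) as [Hle | Hgt].
  - generalize (Rabs_E_le_small t ltac:(lia) Hle). unfold Rdiv. lra.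
  - replace t with (q - (q - t))%nat at 1 by lia. rewrite E_reflect by lia.
    generalize (Rabs_E_le_small (q - t) ltac:(lia) ltac:(lia)). rewrite minus_INR by lia. unfold Rdiv. lra.
Qed.

Lemma E_near_approx t n : (1 <= t <= n)%nat -> (2 * n + 1 <= q)%nat ->
  Rabs (E t - (ln (1 - w t) + w t)) <= 120 * INR n / INR q ^ 2.
Proof.
  intros Ht Hnq. generalize INR_q_ge_100 PI_3_4. intros Hq HPI.
  assert (1 <= INR t) by (apply (le_INR 1); lia).
  assert (INR t <= INR n) by (apply le_INR; lia).
  assert (2 * INR n + 1 <= INR q)
    by (rewrite <- (mult_INR 2), <- S_INR, <- Nat.add_1_r; apply le_INR; lia).
  destruct (theta_small t ltac:(lia) ltac:(lia)) as [Hx Hdx].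
  unfold E, u. rewrite rho_eq, <- (phi_shift_div_theta t) by lia.
  set (d := PI * L * saw t) in *.
  assert (Hd : Rabs d <= 2 / INR q) by apply Rabs_phi_shift_le.
  assert (Hd2 : d ^ 2 <= 4 / INR q ^ 2).
  { rewrite <- pow2_abs. replace (4 / INR q ^ 2) with ((2 / INR q) ^ 2) by (field; lra).
    apply pow_incr. split; [apply Rabs_pos | auto]. }
  assert (Hxt : theta t <= 4 * INR t / INR q)
    by (unfold theta, Rdiv; apply Rmult_le_compat_r; [left; apply Rinv_0_lt_compat|]; nra).
  assert (Hdx2 : 2 * Rabs d * theta t <= 16 * INR n / INR q ^ 2).
  { apply Rle_trans with (2 * (2 / INR q) * (4 * INR t / INR q)).
    - apply Rmult_le_compat; try lra. generalize (Rabs_pos d); lra.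
    - replace (2 * (2 / INR q) * (4 * INR t / INR q)) with (16 * INR t / INR q ^ 2) by (field; lra).
      apply Rmult_le_compat_r; [left; apply Rinv_0_lt_compat, pow_lt|]; lra. }
  assert (Hsum : d ^ 2 + 2 * Rabs d * theta t <= 20 * INR n / INR q ^ 2).
  { assert (4 / INR q ^ 2 <= 4 * INR n / INR q ^ 2)
      by (apply Rmult_le_compat_r; [left; apply Rinv_0_lt_compat, pow_lt|]; lra).
    replace (20 * INR n / INR q ^ 2) with (4 * INR n / INR q ^ 2 + 16 * INR n / INR q ^ 2) by (field; lra). lra. }
  assert (H20 : 20 * INR n / INR q ^ 2 <= 1 / 5).
  { apply Rmult_le_reg_r with (INR q ^ 2); [apply pow_lt; lra|].
    replace (20 * INR n / INR q ^ 2 * INR q ^ 2) with (20 * INR n) by (field; lra). nra. }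
  eapply Rle_trans; [apply ln_sin_shift_ratio_approx; auto; [apply Rabs_phi_shift_small | lra]|]. lra.
Qed.

Lemma near_E_sum_bound n : (1 <= n)%nat -> (2 * n + 1 <= q)%nat ->
  Rabs (rsum 1 n (fun t => E t - (ln (1 - w t) + w t))) <= 120 * INR n ^ 2 / INR q ^ 2.
Proof.
  intros Hn Hnq.
  eapply Rle_trans; [apply rsum_bound with (B := 120 * INR n / INR q ^ 2); intros; apply E_near_approx; lia|].
  right. field. generalize INR_q_ge_100. lra.
Qed.

Lemma log_series_rem_w_sum_bound n : (1 <= n)%nat ->
  Rabs (rsum 1 n (fun t => log_series_rem n (w t))) <= 4 / INR n.
Proof.
  intro Hn. eapply Rle_trans; [|apply INR_mul_pow_half_le; auto].
  apply rsum_bound. intros i Hi.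
  assert (Hw : Rabs (w i) <= 1 / 2).
  { eapply Rle_trans; [apply Rabs_w_le; lia|]. assert (1 <= INR i) by (apply (le_INR 1); lia).
    replace (1 / 2) with (/ 2) by field. apply Rinv_le_contravar; lra. }
  eapply Rle_trans; [apply log_series_rem_bound; lra|].
  apply Rmult_le_compat_l; [lra|]. apply pow_incr. split; [apply Rabs_pos | auto].
Qed.

Lemma mid_E_sum_bound n : (1 <= n)%nat -> (2 * n + 1 <= q)%nat ->
  Rabs (rsum (n + 1) (q - 1 - 2 * n) E) <= 12 / INR n.
Proof.
  intros Hn Hnq. eapply Rle_trans; [apply rsum_abs|].
  eapply Rle_trans.
  { apply rsum_le with (g := fun t => 6 * / INR t ^ 2 + 6 * / (INR q - INR t) ^ 2).
    intros i Hi. apply Rabs_E_le. lia. }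
  rewrite rsum_plus, !rsum_scal.
  generalize (rsum_inv_sq_le (n + 1) (q - 1 - 2 * n) ltac:(lia))
    (rsum_inv_sq_rev_le (n + 1) (q - 1 - 2 * n) q ltac:(lia) ltac:(lia)).
  replace (n + 1 - 1)%nat with n by lia. replace (q - (n + 1) - (q - 1 - 2 * n))%nat with n by lia.
  unfold Rdiv. lra.
Qed.

Lemma ln_prod_rho_eq n : (2 * n + 1 <= q)%nat ->
  ln (rprod 1 (q - 1) rho) = 2 * rsum 1 n E + rsum (n + 1) (q - 1 - 2 * n) E - rsum 1 (q - 1) u.
Proof.
  intro Hnq.
  rewrite ln_rprod by (intros; apply rho_pos; lia).
  rewrite (rsum_ext _ _ _ (fun i => E i - u i)) by (intros; unfold E; ring).
  rewrite rsum_minus, (rsum_palindrome q n E Hnq E_reflect). reflexivity.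
Qed.

(* Near the ends (t <= n) each E t is ln(1 - w t) + w t up to O(n/q^2), and that is the
   truncated series -sum_(j=2..n) w^j/j up to log_series_rem; the middle range contributes O(1/n). *)
Lemma ln_B_approx n K : (1 <= n)%nat -> (2 * n + 1 <= q)%nat -> INR n ^ 3 <= K * INR q ^ 2 ->
  Rabs (ln (Rabs (rprod 1 (q - 1) rho)) -
        (-2 * PI ^ 2 * c / INR q ^ 2 * abel_sum
         - 2 * rsum 1 n (fun t => rsum 2 (n - 1) (fun j => / INR j * w t ^ j))))
  <= (80 + 240 * K) / INR n.
Proof.
  intros Hn Hnq HK. generalize INR_q_ge_100. intro Hq.
  assert (Hnr : 1 <= INR n) by (apply (le_INR 1); lia).
  rewrite (Rabs_pos_eq (rprod _ _ _)) by (left; apply rprod_pos; intros; apply rho_pos; lia).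
  rewrite (ln_prod_rho_eq n Hnq).
  set (T1 := -2 * PI ^ 2 * c / INR q ^ 2 * abel_sum).
  set (T2 := rsum 1 n (fun t => rsum 2 (n - 1) (fun j => / INR j * w t ^ j))).
  set (near := rsum 1 n (fun t => E t - (ln (1 - w t) + w t))).
  set (rem := rsum 1 n (fun t => log_series_rem n (w t))).
  set (mid := rsum (n + 1) (q - 1 - 2 * n) E).
  assert (Hrem : rem = rsum 1 n (fun t => ln (1 - w t) + w t) + T2).
  { unfold rem, T2. rewrite <- rsum_plus. apply rsum_ext. intros i Hi.
    unfold log_series_rem. replace n with (S (n - 1)) at 1 by lia.
    rewrite rsum_cons. simpl (INR 1). rewrite Rinv_1, pow_1. ring. }
  replace (2 * rsum 1 n E + mid - rsum 1 (q - 1) u - (T1 - 2 * T2))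
    with ((- rsum 1 (q - 1) u - T1) + 2 * (near + rem) + mid)
    by (rewrite Hrem; unfold near; rewrite rsum_minus; ring).
  generalize first_order_sum_approx (near_E_sum_bound n Hn Hnq) (log_series_rem_w_sum_bound n Hn)
    (mid_E_sum_bound n Hn Hnq). fold T1 near rem mid. intros E1 E2 E3 E4.
  assert (E1' : 50 / INR q <= 50 / INR n).
  { apply Rmult_le_compat_l; [lra|]. apply Rinv_le_contravar; [lra|].
    apply le_INR in Hnq. rewrite plus_INR, mult_INR in Hnq. simpl in Hnq. lra. }
  assert (E2' : 120 * INR n ^ 2 / INR q ^ 2 <= 120 * K / INR n).
  { apply Rmult_le_reg_r with (INR n * INR q ^ 2); [apply Rmult_lt_0_compat; [|apply pow_lt]; lra|].
    replace (120 * INR n ^ 2 / INR q ^ 2 * (INR n * INR q ^ 2)) with (120 * INR n ^ 3) by (field; lra).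
    replace (120 * K / INR n * (INR n * INR q ^ 2)) with (120 * (K * INR q ^ 2)) by (field; lra). lra. }
  eapply Rle_trans; [apply Rabs_triang3|]. rewrite Rabs_mult, (Rabs_pos_eq 2) by lra.
  generalize (Rabs_triang near rem). intro.
  replace ((80 + 240 * K) / INR n)
    with (50 / INR n + 2 * (120 * K / INR n + 4 / INR n) + 12 / INR n + 10 / INR n) by (field; lra).
  assert (0 < 10 / INR n) by (apply Rdiv_lt_0_compat; lra). lra.
Qed.

Definition C_factor (t : nat) : R := 1 - sin (PI * L / 2) ^ 2 / sin (phi t) ^ 2.
Definition C_main_factor (t : nat) : R := 1 - / (4 * (INR t / c - saw t) ^ 2).

Lemma C_factor_eq t : (1 <= t <= q - 1)%nat ->
  1 - (2 * sin (phi 0)) ^ 2 / (2 * sin (phi t)) ^ 2 = C_factor t.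
Proof. intro Ht. unfold C_factor. rewrite phi_0. generalize (sin_phi_pos t Ht). intro. field. lra. Qed.

Lemma C_factor_unit t : (1 <= t <= q - 1)%nat -> 0 <= C_factor t <= 1.
Proof.
  intro Ht. unfold C_factor. generalize (sin_phi_pos t Ht) (sin_phi_ge t Ht) sin_phi_0_bounds.
  intros Hpos Hge [Ha _].
  assert (0 <= sin (PI * L / 2) ^ 2 / sin (phi t) ^ 2 <= 1); [|lra].
  split; [apply Rle_mult_inv_pos; [apply pow_le | apply pow_lt]; lra|].
  apply Rmult_le_reg_r with (sin (phi t) ^ 2); [apply pow_lt; lra|].
  replace (sin (PI * L / 2) ^ 2 / sin (phi t) ^ 2 * sin (phi t) ^ 2) with (sin (PI * L / 2) ^ 2) by (field; lra).
  rewrite Rmult_1_l. apply pow_incr; lra.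
Qed.

Lemma C_factor_reflect t : (1 <= t <= q - 1)%nat -> C_factor (q - t) = C_factor t.
Proof. intro Ht. unfold C_factor. rewrite phi_reflect, sin_PI_x by lia. reflexivity. Qed.

Lemma C_main_factor_eq t : (1 <= t)%nat -> C_main_factor t = 1 - (PI * L / 2) ^ 2 / phi t ^ 2.
Proof.
  intro Ht. generalize INR_q_ge_100 (saw_bounds t) PI_3_4. intros Hq Hs HPI.
  assert (1 <= INR t) by (apply (le_INR 1); lia).
  unfold C_main_factor, phi. rewrite L_def.
  assert (INR t - c * saw t > 0) by nra.
  replace (INR t / INR q - c / INR q * saw t) with ((INR t - c * saw t) / INR q) by (field; lra).
  replace (INR t / c - saw t) with ((INR t - c * saw t) / c) by (field; lra).
  field. lra.
Qed.

(* For t <= k both factors are 1 - a^2/y^2 with y = phi t, once with sin applied to a and y. *)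
Lemma C_main_factor_approx k t : (2 * k + 1 <= q)%nat -> (1 <= t <= k)%nat ->
  0 <= C_main_factor t <= 1 /\ Rabs (C_factor t - C_main_factor t) <= 16 / INR q ^ 2.
Proof.
  intros Hkq Ht. generalize INR_q_ge_100 PI_3_4 L_bounds. intros Hq HPI [HL [HLq HLinv]].
  assert (Ht' : (1 <= t <= q - 1)%nat) by lia.
  generalize (phi_inner t Ht') (phi_bounds t). intros [Hy1 _] [_ Hy2].
  assert (INR t <= INR k) by (apply le_INR; lia).
  assert (2 * INR k + 1 <= INR q) by (rewrite <- (mult_INR 2), <- S_INR, <- Nat.add_1_r; apply le_INR; lia).
  assert (Hphi : phi t <= PI / 2).
  { eapply Rle_trans; [apply Hy2|]. replace (PI / 2) with (PI * (1 / 2)) by field.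
    apply Rmult_le_compat_l; [lra|]. apply Rmult_le_reg_r with (2 * INR q); [lra|].
    replace ((INR t / INR q + L / 2) * (2 * INR q)) with (2 * INR t + L * INR q) by (field; lra). lra. }
  assert (Ha : 0 < PI * L / 2) by nra.
  rewrite C_main_factor_eq by lia. split.
  - assert (0 <= (PI * L / 2) ^ 2 / phi t ^ 2 <= 1); [|lra].
    split; [apply Rle_mult_inv_pos; [apply pow_le | apply pow_lt]; lra|].
    apply Rmult_le_reg_r with (phi t ^ 2); [apply pow_lt; lra|].
    replace ((PI * L / 2) ^ 2 / phi t ^ 2 * phi t ^ 2) with ((PI * L / 2) ^ 2) by (field; lra).
    rewrite Rmult_1_l. apply pow_incr; lra.
  - unfold C_factor.
    replace (1 - sin (PI * L / 2) ^ 2 / sin (phi t) ^ 2 - (1 - (PI * L / 2) ^ 2 / phi t ^ 2))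
      with ((PI * L / 2) ^ 2 / phi t ^ 2 - sin (PI * L / 2) ^ 2 / sin (phi t) ^ 2) by ring.
    eapply Rle_trans; [apply sq_ratio_sub_sin_sq_ratio_le; lra|].
    assert (PI * L / 2 <= 2 / INR q).
    { apply Rmult_le_reg_r with (INR q); [lra|].
      replace (PI * L / 2 * INR q) with (PI * (L * INR q) / 2) by field.
      replace (2 / INR q * INR q) with 2 by (field; lra). nra. }
    replace (16 / INR q ^ 2) with (4 * (2 / INR q) ^ 2) by (field; lra).
    apply Rmult_le_compat_l; [lra|]. apply pow_incr. lra.
Qed.

Lemma head_prod_approx k : (1 <= k)%nat -> (2 * k + 1 <= q)%nat ->
  Rabs (rprod 1 k C_factor - rprod 1 k C_main_factor) <= 16 / INR k.
Proof.
  intros Hk Hkq. generalize INR_q_ge_100. intro Hq.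
  assert (1 <= INR k) by (apply (le_INR 1); lia).
  assert (2 * INR k + 1 <= INR q) by (rewrite <- (mult_INR 2), <- S_INR, <- Nat.add_1_r; apply le_INR; lia).
  eapply Rle_trans.
  { apply rprod_diff_le. intros i Hi.
    split; [apply C_factor_unit; lia | apply (C_main_factor_approx k); lia]. }
  eapply Rle_trans; [apply rsum_le with (g := fun _ => 16 / INR q ^ 2); intros i Hi; apply (C_main_factor_approx k); lia|].
  rewrite rsum_const.
  apply Rmult_le_reg_r with (INR k * INR q ^ 2 / 16); [apply Rdiv_lt_0_compat; [apply Rmult_lt_0_compat; [|apply pow_lt] |]; lra|].
  replace (INR k * (16 / INR q ^ 2) * (INR k * INR q ^ 2 / 16)) with (INR k * INR k) by (field; lra).
  replace (16 / INR k * (INR k * INR q ^ 2 / 16)) with (INR q ^ 2) by (field; lra). nra.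
Qed.

Lemma sqrt_C_factor_bounds t : (1 <= t <= q - 1)%nat ->
  0 <= sqrt (C_factor t) <= 1 /\ C_factor t <= sqrt (C_factor t).
Proof.
  intro Ht. generalize (C_factor_unit t Ht). intro Hf.
  assert (sqrt (C_factor t) <= 1) by (rewrite <- sqrt_1; apply sqrt_le_1_alt; lra).
  generalize (sqrt_pos (C_factor t)) (sqrt_sqrt (C_factor t) ltac:(lra)). nra.
Qed.

Lemma tail_prod_approx k : (1 <= k)%nat -> (2 * k + 1 <= q)%nat ->
  Rabs (rprod (k + 1) (q - 1 - 2 * k) (fun t => sqrt (C_factor t)) - 1) <= 32 / INR k.
Proof.
  intros Hk Hkq. rewrite <- (rprod_const_1 (k + 1) (q - 1 - 2 * k)).
  eapply Rle_trans; [apply rprod_diff_le; intros i Hi; split; [apply sqrt_C_factor_bounds; lia | lra]|].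
  apply Rle_trans with (rsum (k + 1) (q - 1 - 2 * k) (fun t => 16 * / INR t ^ 2 + 16 * / (INR q - INR t) ^ 2)).
  { apply rsum_le. intros i Hi. assert (Hi' : (1 <= i <= q - 1)%nat) by lia.
    generalize (sqrt_C_factor_bounds i Hi') (sin_phi_ratio_le i Hi'). intros [[_ Hg1] Hfg] Hratio.
    rewrite Rabs_minus_sym, Rabs_pos_eq by lra. unfold C_factor at 1 in Hfg. unfold Rdiv in Hratio. lra. }
  rewrite rsum_plus, !rsum_scal.
  generalize (rsum_inv_sq_le (k + 1) (q - 1 - 2 * k) ltac:(lia))
    (rsum_inv_sq_rev_le (k + 1) (q - 1 - 2 * k) q ltac:(lia) ltac:(lia)).
  replace (k + 1 - 1)%nat with k by lia. replace (q - (k + 1) - (q - 1 - 2 * k))%nat with k by lia.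
  unfold Rdiv. lra.
Qed.

(* By symmetry the product over [1, q-1] of sqrt (C_factor t) is the product of C_factor t
   over [1, k] times the middle block, which is close to 1. *)
Lemma C_approx k : (1 <= k)%nat -> (2 * k + 1 <= q)%nat ->
  Rabs (rprod 1 (q - 1) (fun t => sqrt (1 - (2 * sin (phi 0)) ^ 2 / (2 * sin (phi t)) ^ 2))
        - rprod 1 k C_main_factor) <= 48 / INR k.
Proof.
  intros Hk Hkq. assert (1 <= INR k) by (apply (le_INR 1); lia).
  rewrite (rprod_ext 1 (q - 1) _ (fun t => sqrt (C_factor t))) by (intros; rewrite C_factor_eq by lia; reflexivity).
  rewrite (rprod_palindrome q k) by (try lia; intros; rewrite C_factor_reflect by lia; reflexivity).
  rewrite <- rprod_mult, (rprod_ext 1 k _ C_factor) by (intros; apply sqrt_sqrt, C_factor_unit; lia).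
  set (tail := rprod (k + 1) (q - 1 - 2 * k) (fun t => sqrt (C_factor t))).
  assert (Htail : 0 <= tail <= 1) by (apply rprod_unit_interval; intros; apply sqrt_C_factor_bounds; lia).
  assert (Hhead : 0 <= rprod 1 k C_main_factor <= 1)
    by (apply rprod_unit_interval; intros; apply (C_main_factor_approx k); lia).
  generalize (head_prod_approx k Hk Hkq) (tail_prod_approx k Hk Hkq). fold tail. intros E1 E2.
  replace (rprod 1 k C_factor * tail - rprod 1 k C_main_factor)
    with ((rprod 1 k C_factor - rprod 1 k C_main_factor) * tail + rprod 1 k C_main_factor * (tail - 1)) by ring.
  eapply Rle_trans; [apply Rabs_triang|]. rewrite !Rabs_mult, (Rabs_pos_eq tail), (Rabs_pos_eq (rprod _ _ _)) by lra.
  generalize (Rabs_pos (rprod 1 k C_factor - rprod 1 k C_main_factor)) (Rabs_pos (tail - 1)). intros.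
  replace (48 / INR k) with (16 / INR k + 32 / INR k) by (field; lra). nra.
Qed.

End Factors.

(** * Continued fractions *)

Definition irrational (al : R) : Prop := forall (p : Z) (q : positive), al <> IZR p / IZR (Zpos q).

Lemma irrational_mul_nat_neq al P Q : irrational al -> (1 <= Q)%nat -> al * INR Q <> INR P.
Proof.
  intros Hal HQ E. apply (Hal (Z.of_nat P) (Pos.of_nat Q)).
  rewrite <- positive_nat_Z, Nat2Pos.id, <- !INR_IZR_INZ by lia.
  assert (0 < INR Q) by (apply lt_0_INR; lia). rewrite <- E. field. lra.
Qed.

Lemma conv_pair_SS al u0 u1 n :
  fst (conv_pair al u0 u1 (S (S n)))
  = (cf_a al (S n) * fst (conv_pair al u0 u1 (S n)) + fst (conv_pair al u0 u1 n))%nat.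
Proof. simpl. destruct (conv_pair al u0 u1 n). reflexivity. Qed.

Lemma cf_q_SS al n : cf_q al (S (S n)) = (cf_a al (S n) * cf_q al (S n) + cf_q al n)%nat.
Proof. apply conv_pair_SS. Qed.

Lemma cf_p_SS al n : cf_p al (S (S n)) = (cf_a al (S n) * cf_p al (S n) + cf_p al n)%nat.
Proof. apply conv_pair_SS. Qed.

Lemma gauss_x_step al n : 0 < gauss_x al n < 1 ->
  (1 <= cf_a al (S n))%nat /\ 0 <= gauss_x al (S n) < 1 /\
  gauss_x al n * (INR (cf_a al (S n)) + gauss_x al (S n)) = 1.
Proof.
  intro Hg. set (g := gauss_x al n) in *.
  assert (Hig : 1 < / g) by (rewrite <- Rinv_1; apply Rinv_lt_contravar; lra).
  destruct (base_Int_part (/ g)) as [Hz1 Hz2].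
  assert (Hz : (0 < Int_part (/ g))%Z) by (apply lt_IZR; lra).
  assert (Ha : INR (cf_a al (S n)) = IZR (Int_part (/ g)))
    by (unfold cf_a; simpl pred; fold g; rewrite INR_IZR_INZ, Z2Nat.id by lia; reflexivity).
  assert (Hg' : gauss_x al (S n) = / g - IZR (Int_part (/ g))) by reflexivity.
  destruct (base_fp (/ g)) as [Hf1 Hf2]. unfold frac_part in Hf1, Hf2.
  split; [|split; [lra|]].
  - apply INR_le. rewrite Ha. apply IZR_le. lia.
  - rewrite Ha, Hg'. field. lra.
Qed.

Lemma cf_invariants al : 0 < al < 1 -> irrational al -> forall n,
  0 < gauss_x al n < 1 /\
  al * (INR (cf_q al (S n)) + INR (cf_q al n) * gauss_x al n)
    = INR (cf_p al (S n)) + INR (cf_p al n) * gauss_x al n /\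
  (1 <= cf_q al (S n))%nat /\ (cf_q al n <= cf_q al (S n))%nat /\ (n <= cf_q al (S n))%nat /\
  (n = 0 \/ 1 <= cf_q al n)%nat.
Proof.
  intros Hal Hirr. induction n as [|n IH].
  - unfold cf_q, cf_p. simpl. repeat split; lra || lia.
  - destruct IH as [Hg [Hid [Hq1 [Hq2 [Hq3 Hq4]]]]].
    destruct (gauss_x_step al n Hg) as [Ha1 [[Hg0 Hg1] Hrel]].
    set (g := gauss_x al n) in *. set (g' := gauss_x al (S n)) in *.
    set (a := INR (cf_a al (S n))) in *.
    assert (Hid' : al * (a * INR (cf_q al (S n)) + INR (cf_q al n) + INR (cf_q al (S n)) * g')
                   = a * INR (cf_p al (S n)) + INR (cf_p al n) + INR (cf_p al (S n)) * g').
    { apply Rmult_eq_reg_l with g; [|lra].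
      transitivity (al * (INR (cf_q al (S n)) * (g * (a + g')) + INR (cf_q al n) * g)); [ring|].
      transitivity (INR (cf_p al (S n)) * (g * (a + g')) + INR (cf_p al n) * g); [|ring].
      rewrite Hrel. lra. }
    assert (Hq' : (1 <= cf_q al (S (S n)))%nat) by (rewrite cf_q_SS; nia).
    rewrite cf_q_SS, cf_p_SS, !plus_INR, !mult_INR. fold a.
    split; [split; [|lra]|].
    + destruct (Rle_lt_or_eq_dec 0 g' Hg0) as [Hp | He]; [exact Hp|]. exfalso.
      apply (irrational_mul_nat_neq al (cf_p al (S (S n))) (cf_q al (S (S n))) Hirr Hq').
      rewrite cf_q_SS, cf_p_SS, !plus_INR, !mult_INR. fold a. rewrite <- He in Hid'. lra.
    + repeat split; [exact Hid' | nia | nia | destruct Hq4 as [-> | Hq4]; simpl in *; nia | right; exact Hq1].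
Qed.

Lemma cf_det al n :
  (INR (cf_q al (S n)) * INR (cf_p al n) - INR (cf_p al (S n)) * INR (cf_q al n)) ^ 2 = 1.
Proof.
  induction n as [|n IH]; [unfold cf_q, cf_p; simpl; ring|].
  rewrite cf_q_SS, cf_p_SS, !plus_INR, !mult_INR, <- IH. ring.
Qed.

Lemma Lambda_abs_eq al m : 0 < al < 1 -> irrational al ->
  Rabs (Lambda al (S m)) = c_n al (S m) / INR (cf_q al (S m)) /\ 0 < c_n al (S m) < 1.
Proof.
  intros Hal Hirr. destruct (cf_invariants al Hal Hirr m) as [[Hg0 Hg1] [Hid [Hq1 [Hq2 _]]]].
  generalize (cf_det al m).
  set (g := gauss_x al m) in *.
  set (Q1 := INR (cf_q al (S m))) in *. set (Q0 := INR (cf_q al m)) in *.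
  set (P1 := INR (cf_p al (S m))) in *. set (P0 := INR (cf_p al m)) in *. intro Hdet.
  assert (HQ1 : 1 <= Q1) by (apply (le_INR 1); lia).
  assert (HQ0 : 0 <= Q0) by apply pos_INR.
  assert (HQ01 : Q0 <= Q1) by (apply le_INR; lia).
  assert (HL : Lambda al (S m) * (Q0 + Q1 / g) = Q1 * P0 - P1 * Q0).
  { unfold Lambda. fold Q1 P1. apply Rmult_eq_reg_l with g; [|lra].
    replace (g * ((Q1 * al - P1) * (Q0 + Q1 / g))) with ((Q1 * al - P1) * (g * Q0 + Q1)) by (field; lra).
    replace (Q1 * al - P1) with (P0 * g - al * Q0 * g) by lra. nra. }
  assert (Hdet1 : Rabs (Q1 * P0 - P1 * Q0) = 1).
  { rewrite <- pow2_abs in Hdet. generalize (Rabs_pos (Q1 * P0 - P1 * Q0)). nra. }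
  assert (0 < Q1 / g) by (apply Rdiv_lt_0_compat; lra).
  assert (1 < / g) by (rewrite <- Rinv_1; apply Rinv_lt_contravar; lra).
  assert (0 <= Q0 / Q1) by (apply Rle_mult_inv_pos; lra).
  unfold c_n, alpha_plus, alpha_minus. simpl pred. fold g Q1 Q0.
  split; [|split; [apply Rinv_0_lt_compat; lra | rewrite <- Rinv_1; apply Rinv_lt_contravar; lra]].
  apply Rmult_eq_reg_r with (Q0 + Q1 / g); [|lra].
  rewrite <- (Rabs_pos_eq (Q0 + Q1 / g)) at 1 by lra.
  rewrite <- Rabs_mult, HL, Hdet1. field. assert (0 <= Q0 * g) by nra. repeat split; lra.
Qed.

Lemma frac_reflect_nat q r t : (1 <= t <= q - 1)%nat -> frac (INR t * INR r / INR q) <> 0 ->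
  frac (INR (q - t) * INR r / INR q) = 1 - frac (INR t * INR r / INR q).
Proof.
  intros Ht Hf. unfold frac in *.
  assert (0 < INR q) by (apply lt_0_INR; lia).
  set (x := INR t * INR r / INR q) in *.
  replace (INR (q - t) * INR r / INR q) with (INR r - x) by (unfold x; rewrite minus_INR by lia; field; lra).
  destruct (base_fp x) as [H1 H2].
  symmetry. apply (Int_part_frac_part_spec (INR r - x) (Z.of_nat r - Int_part x - 1)%Z (1 - frac_part x)).
  - lra.
  - rewrite !minus_IZR, <- INR_IZR_INZ. unfold frac_part. ring.
Qed.

(* If t q_(n-1) / q_n were an integer k for 0 < t < q_n, the determinant identity would give
   t = q_n * z for the integer z = t p_(n-1) - p_n k, forcing 0 < z^2 < 1. *)
Lemma frac_cf_nonzero al m t : 0 < al < 1 -> irrational al -> (1 <= t <= cf_q al (S m) - 1)%nat ->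
  frac (INR t * INR (cf_q al m) / INR (cf_q al (S m))) <> 0.
Proof.
  intros Hal Hirr Ht Hf. destruct (cf_invariants al Hal Hirr m) as [_ [_ [Hq1 _]]].
  unfold frac in Hf. destruct (fp_nat _ Hf) as [k Hk].
  generalize (cf_det al m). intro Hdet.
  set (Q1 := INR (cf_q al (S m))) in *. set (Q0 := INR (cf_q al m)) in *.
  set (P1 := INR (cf_p al (S m))) in *. set (P0 := INR (cf_p al m)) in *.
  assert (HQ : 0 < Q1) by (apply lt_0_INR; lia).
  assert (Ht1 : 1 <= INR t) by (apply (le_INR 1); lia).
  assert (Ht2 : INR t + 1 <= Q1) by (unfold Q1; rewrite <- S_INR; apply le_INR; lia).
  assert (Htk : INR t * Q0 = IZR k * Q1) by (rewrite <- Hk; field; lra).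
  set (z := (Z.of_nat t * Z.of_nat (cf_p al m) - Z.of_nat (cf_p al (S m)) * k)%Z).
  assert (Hz : IZR z = INR t * P0 - P1 * IZR k)
    by (unfold z, P0, P1; rewrite minus_IZR, !mult_IZR, <- !INR_IZR_INZ; ring).
  assert (Hsq : INR t ^ 2 = (Q1 * IZR z) ^ 2).
  { rewrite Hz, <- (Rmult_1_r (INR t ^ 2)), <- Hdet.
    replace ((Q1 * (INR t * P0 - P1 * IZR k)) ^ 2) with ((INR t * Q1 * P0 - P1 * (IZR k * Q1)) ^ 2) by ring.
    rewrite <- Htk. ring. }
  assert (Hz2 : 0 < IZR (z * z) < 1).
  { rewrite mult_IZR. split.
    - destruct (Req_dec (IZR z) 0) as [E|E]; [rewrite E in Hsq; nra|].
      apply Rlt_0_sqr. exact E.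
    - apply Rmult_lt_reg_l with (Q1 ^ 2); [apply pow_lt; lra|].
      replace (Q1 ^ 2 * (IZR z * IZR z)) with ((Q1 * IZR z) ^ 2) by ring. rewrite <- Hsq. nra. }
  destruct Hz2 as [A B]. apply lt_IZR in A. apply lt_IZR in B. lia.
Qed.

Lemma A_approx Q Lam c : 1 <= Q -> Rabs Lam = c / Q -> 0 < c < 1 ->
  Rabs (Rabs (2 * Q * sin (PI * Lam)) - 2 * PI * c) <= 3 * (2 * PI * c) * Lam ^ 2.
Proof.
  intros HQ HL Hc. generalize PI_3_4; intro.
  assert (Hc2 : c = Rabs Lam * Q) by (rewrite HL; field; lra).
  assert (HL0 : 0 < Rabs Lam) by (rewrite HL; apply Rdiv_lt_0_compat; lra).
  assert (HL1 : Rabs Lam <= 1) by (apply Rmult_le_reg_r with Q; [|rewrite <- Hc2]; lra).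
  assert (Hs : Rabs (sin (PI * Lam)) = sin (PI * Rabs Lam)).
  { destruct (Rle_lt_dec 0 Lam).
    - rewrite !(Rabs_pos_eq Lam) by lra. apply Rabs_pos_eq, sin_ge_0; rewrite Rabs_pos_eq in HL1; nra.
    - rewrite !(Rabs_left Lam) in * by lra. replace (PI * Lam) with (- (PI * - Lam)) by ring.
      rewrite sin_neg, Rabs_Ropp. apply Rabs_pos_eq, sin_ge_0; nra. }
  rewrite Rabs_mult, Hs, (Rabs_pos_eq (2 * Q)) by lra.
  rewrite <- pow2_abs. set (l := Rabs Lam) in *. subst c.
  generalize (id_sub_sin_bounds (PI * l) ltac:(split; nra)). intros [H1 H2].
  replace (2 * Q * sin (PI * l) - 2 * PI * (l * Q)) with (- (2 * Q * (PI * l - sin (PI * l)))) by ring.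
  rewrite Rabs_Ropp, Rabs_pos_eq by nra.
  apply Rle_trans with (2 * Q * ((PI * l) ^ 3 / 6)); [apply Rmult_le_compat_l; lra|].
  replace (2 * Q * ((PI * l) ^ 3 / 6)) with (2 * Q * (PI * l ^ 3) * (PI ^ 2 / 6)) by field.
  replace (3 * (2 * PI * (l * Q)) * l ^ 2) with (2 * Q * (PI * l ^ 3) * 3) by ring.
  apply Rmult_le_compat_l; [|nra]. apply Rmult_le_pos; [lra|]. apply Rmult_le_pos; [lra | apply pow_le; lra].
Qed.

Lemma eventually_increasing_sqrt_bounds al u : eventually_increasing u -> bigO_sqrt_q al u ->
  exists K N, forall n, (N <= n)%nat -> (1 <= u n)%nat /\ INR (u n) <= K * sqrt (INR (cf_q al n)).
Proof.
  intros [N1 Hinc] [K [N2 HK]]. exists K, (S N1 + N2)%nat. intros n Hn. split; [|apply HK; lia].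
  assert (Hge : forall k, (k <= u (N1 + k))%nat).
  { induction k as [|k IH]; [lia|]. rewrite Nat.add_succ_r. specialize (Hinc (N1 + k)%nat). lia. }
  generalize (Hge (n - N1)%nat). replace (N1 + (n - N1))%nat with n by lia. lia.
Qed.

Lemma sqrt_bound_consequences K Q t : INR t <= K * sqrt (INR Q) -> 4 * K ^ 2 + 2 <= INR Q ->
  (2 * t + 1 <= Q)%nat /\ INR t ^ 3 <= K ^ 2 * INR Q ^ 2.
Proof.
  intros Ht HQ. generalize (pos_INR t) (pow2_ge_0 K). intros Ht0 HK.
  assert (Hsq : INR t ^ 2 <= K ^ 2 * INR Q).
  { replace (K ^ 2 * INR Q) with ((K * sqrt (INR Q)) ^ 2)
      by (rewrite Rpow_mult_distr, pow2_sqrt by lra; reflexivity).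
    apply pow_incr. lra. }
  assert (HtQ : (2 * t + 1 <= Q)%nat).
  { apply INR_le. rewrite plus_INR, mult_INR. simpl. nra. }
  split; [exact HtQ|].
  assert (INR t <= INR Q) by (apply le_INR; lia).
  replace (INR t ^ 3) with (INR t * INR t ^ 2) by ring.
  replace (K ^ 2 * INR Q ^ 2) with (INR Q * (K ^ 2 * INR Q)) by ring.
  apply Rmult_le_compat; lra || (apply pow_le; lra).
Qed.

Lemma cf_frac_reflect al m : 0 < al < 1 -> irrational al ->
  forall t, (1 <= t <= cf_q al (S m) - 1)%nat ->
  frac (INR (cf_q al (S m) - t) * INR (cf_q al m) / INR (cf_q al (S m)))
  = 1 - frac (INR t * INR (cf_q al m) / INR (cf_q al (S m))).
Proof. intros Hal Hirr t Ht. apply frac_reflect_nat; auto. apply frac_cf_nonzero; auto. Qed.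

Section CFFactors.

Variables (al : R) (m : nat).
Let q := cf_q al (S m).
Let r := cf_q al m.
Let c := c_n al (S m).
Let L := Rabs (Lambda al (S m)).

Lemma B_n_eq : B_n al (S m) = Rabs (rprod 1 (q - 1) (rho q r L)).
Proof. unfold B_n. rewrite prodR_rprod, Nat.sub_succ, Nat.sub_0_r. reflexivity. Qed.

Lemma logB_main_eq tau : logB_main al tau (S m) =
  -2 * PI ^ 2 * c / INR q ^ 2 * abel_sum q r
  - 2 * rsum 1 (tau (S m)) (fun t => rsum 2 (tau (S m) - 1) (fun j => / INR j * w q r c t ^ j)).
Proof.
  unfold logB_main, M_n, abel_sum, half_q. rewrite !sumR_rsum, !Nat.sub_succ, !Nat.sub_0_r.
  rewrite (rsum_ext 1 (_ - 1) _ (fun t => D q r t / (sin (theta q t) * sin (theta q (S t))))); [reflexivity|].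
  intros t _. unfold Dt, D. rewrite sumR_rsum, Nat.sub_succ, Nat.sub_0_r. f_equal.
  apply rsum_ext. intros s _. unfold saw, alpha_minus. simpl pred. do 2 f_equal. unfold q, r, Rdiv. ring.
Qed.

Lemma C_n_eq : C_n al (S m) =
  rprod 1 (q - 1) (fun t => sqrt (1 - (2 * sin (phi q r L 0)) ^ 2 / (2 * sin (phi q r L t)) ^ 2)).
Proof. unfold C_n. rewrite prodR_rprod, Nat.sub_succ, Nat.sub_0_r. reflexivity. Qed.

Lemma C_main_eq kappa : C_main al kappa (S m) = rprod 1 (kappa (S m)) (C_main_factor q r c).
Proof. unfold C_main. rewrite prodR_rprod, Nat.sub_succ, Nat.sub_0_r. reflexivity. Qed.

End CFFactors.

Theorem lemma3p2 (al : R) (tau kappa : nat -> nat) :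
  0 < al < 1 ->
  (forall (p : Z) (q : positive), al <> IZR p / IZR (Zpos q)) ->
  eventually_increasing tau -> eventually_increasing kappa ->
  bigO_sqrt_q al tau -> bigO_sqrt_q al kappa ->
  exists (K : R) (N : nat), forall n : nat, (N <= n)%nat ->
    Rabs (A_n al n - 2 * PI * c_n al n) <= K * (2 * PI * c_n al n) * (Lambda al n) ^ 2 /\
    Rabs (ln (B_n al n) - logB_main al tau n) <= K / INR (tau n) /\
    Rabs (C_n al n - C_main al kappa n) <= K / INR (kappa n).
Proof.
  intros Hal Hirr Htau Hkappa Htau_O Hkappa_O. fold (irrational al) in Hirr.
  destruct (eventually_increasing_sqrt_bounds al tau Htau Htau_O) as [Kt [Nt Ht]].
  destruct (eventually_increasing_sqrt_bounds al kappa Hkappa Hkappa_O) as [Kk [Nk Hk]].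
  destruct (INR_unbounded (4 * Kt ^ 2 + 4 * Kk ^ 2 + 102)) as [N0 HN0].
  exists (131 + 240 * Kt ^ 2), (S (Nt + Nk + N0)). intros [|m] Hm; [lia|].
  destruct (cf_invariants al Hal Hirr m) as [_ [_ [_ [_ [Hmq _]]]]].
  destruct (Lambda_abs_eq al m Hal Hirr) as [HLam Hc].
  assert (Hq : INR N0 <= INR (cf_q al (S m))) by (apply le_INR; lia).
  generalize (pow2_ge_0 Kt) (pow2_ge_0 Kk) (pos_INR N0). intros HKt HKk HN0'.
  assert (Hq100 : (100 <= cf_q al (S m))%nat) by (apply INR_le; simpl; lra).
  destruct (Ht (S m) ltac:(lia)) as [Ht1 HtK]. destruct (Hk (S m) ltac:(lia)) as [Hk1 HkK].
  destruct (sqrt_bound_consequences Kt _ _ HtK ltac:(lra)) as [Htq Ht3].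
  destruct (sqrt_bound_consequences Kk _ _ HkK ltac:(lra)) as [Hkq _].
  assert (Hmono : forall k a, (1 <= k)%nat -> a <= 131 + 240 * Kt ^ 2 -> a / INR k <= (131 + 240 * Kt ^ 2) / INR k)
    by (intros k a Hk1' Ha; apply Rmult_le_compat_r; [left; apply Rinv_0_lt_compat, lt_0_INR; lia | lra]).
  pose proof (cf_frac_reflect al m Hal Hirr) as Hrefl.
  split; [|split].
  - eapply Rle_trans; [apply A_approx; auto; apply (le_INR 1); lia|].
    apply Rmult_le_compat_r; [apply pow2_ge_0|]. apply Rmult_le_compat_r; [generalize PI_3_4; nra | lra].
  - rewrite B_n_eq, logB_main_eq. eapply Rle_trans; [apply ln_B_approx; eauto|]. apply Hmono; [lia | lra].
  - rewrite C_n_eq, C_main_eq. eapply Rle_trans; [apply C_approx; eauto|]. apply Hmono; [lia | lra].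
Qed.
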